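(* Fix a real number $\beta>-1$. Let $s\in\mathbb{C}$ with $0<|s|<1$ be such that $\psi_s(z)=\dfrac{sz}{1-(1-s)z}$ maps $\mathbb{D}$ into $\mathbb{D}$. Then the composition operator $C_{\psi_s}f=f\circ\psi_s$ is not cyclic on $A^2_\beta$.
   Context: $\mathbb{D}$ is the open unit disc. For $\beta>-1$, $A^2_\beta$ is the Hilbert space of analytic functions $f(z)=\sum_{n\ge0}\widehat f(n)z^n$ on $\mathbb{D}$ with inner product $\langle f,g\rangle=\sum_{n\ge0}\frac{n!\,\Gamma(2+\beta)}{\Gamma(n+2+\beta)}\widehat f(n)\overline{\widehat g(n)}$ (equivalently the $L^2$ inner product with respect to $(\beta+1)(1-|z|^2)^\beta dA(z)$). An operator $T$ on $\mathcal H$ is cyclic if there is $f\in\mathcal H$ such that the linear span of $\{T^nf:n\ge0\}$ is dense in $\mathcal H$. *)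

From Stdlib Require Import Reals.
From Coquelicot Require Import Coquelicot.
Open Scope R_scope.

(* Weight of the A^2_beta inner product:
   weight beta n = n! Gamma(2+beta) / Gamma(n+2+beta)
                 = prod_{k=1}^n k / (k+1+beta)   (unfolded via Gamma(x+1)=x Gamma(x)). *)
Fixpoint A2weight (beta : R) (n : nat) : R :=
  match n with
  | O => 1
  | S m => A2weight beta m * (INR (S m) / (INR (S m) + 1 + beta))
  end.

Definition has_coeffs (f : C -> C) (a : nat -> C) : Prop :=
  forall z : C, Cmod z < 1 -> is_series (fun n => Cmult (a n) (pow_n z n)) (f z).

Definition inA2 (beta : R) (f : C -> C) : Prop :=
  exists a : nat -> C, has_coeffs f a /\
    ex_series (fun n => A2weight beta n * (Cmod (a n))^2).

Definition A2dist_lt (beta : R) (f g : C -> C) (eps : R) : Prop :=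
  exists (a b : nat -> C) (L : R), has_coeffs f a /\ has_coeffs g b /\
    is_series (fun n => A2weight beta n * (Cmod (Cminus (a n) (b n)))^2) L /\
    L < eps^2.

Definition cyclic_A2 (beta : R) (T : (C -> C) -> (C -> C)) : Prop :=
  exists f : C -> C, inA2 beta f /\
    forall g : C -> C, inA2 beta g -> forall eps : R, 0 < eps ->
      exists (N : nat) (c : nat -> C),
        A2dist_lt beta g
          (fun z => sum_n (fun k => Cmult (c k) (Nat.iter k T f z)) N) eps.

Definition comp_op (phi : C -> C) (f : C -> C) : C -> C := fun z => f (phi z).

Definition psi (s z : C) : C :=
  Cdiv (Cmult s z) (Cminus (RtoC 1) (Cmult (Cminus (RtoC 1) s) z)).

Definition psi_self_map (s : C) : Prop :=
  forall z : C, Cmod z < 1 ->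
    Cminus (RtoC 1) (Cmult (Cminus (RtoC 1) s) z) <> RtoC 0 /\ Cmod (psi s z) < 1.

(** In the variable w = 1/z, ψ_s is the affine map w ↦ 1 + (w - 1)/s, which keeps the exterior
    of the unit disc invariant only if s is real and positive; so s ∈ (0,1). Then C_ψ acts on
    Taylor coefficients through the lower triangular matrix M(j,n) = [z^j] ψ_s(z)^n.
    For α ∈ ℂ let λ_α(j) = [x^(j-1)] (1 - x)^(α-1). The binomial series gives
    Σ_j λ_α(j) M(j,n) = s^α λ_α(n), so f ↦ Σ_j λ_α(j) f̂(j) is an eigenvector of the adjoint of C_ψ,
    and it is bounded on A²_β once Re α is large, because the weights of A²_β decay only
    polynomially while λ_α(j) = O(j^(-Re α)). As s^(2πi/ln s) = 1, the exponents α = m and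
    α = m + 2πi/ln s give two independent eigenfunctionals with the same eigenvalue s^m; a nonzero
    combination of them vanishes at f, hence on the orbit of f and on its span, which is therefore
    not dense. *)

From Stdlib Require Import Reals Lra Lia Arith Classical_Prop.
From Coquelicot Require Import Coquelicot.
Open Scope R_scope.

(* [ring] for equalities in [C] stated with Coquelicot's generic [plus], [scal], ... *)
Ltac C_ring :=
  match goal with |- @eq _ ?a ?b => change (@eq C a b) end;
  unfold minus, mult, plus, scal, opp, zero, one; cbn -[Cplus Cmult Copp RtoC]; ring.

(** * Series *)

Lemma norm_series_le {K : AbsRing} {V : NormedModule K} (a : nat -> V) (b : nat -> R) la lb :
  is_series a la -> is_series b lb -> (forall n, norm (a n) <= b n) -> norm la <= lb.
Proof.
  intros Ha Hb Hab.
  assert (Hpartial : forall n, norm (sum_n a n) <= sum_n b n).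
  { intros n. eapply Rle_trans; [apply norm_sum_n_m|]. apply sum_n_m_le. exact Hab. }
  apply (is_lim_seq_le _ _ (norm la) lb Hpartial); [|exact Hb].
  exact (filterlim_comp _ _ _ (sum_n a) norm _ _ _ Ha (filterlim_norm la)).
Qed.

Lemma is_series_unique_gen {K : AbsRing} {V : NormedModule K} (a : nat -> V) l l' :
  is_series a l -> is_series a l' -> l = l'.
Proof. apply filterlim_locally_unique. Qed.

Lemma is_series_finite {K : AbsRing} {V : NormedModule K} (u : nat -> V) (M : nat) :
  (forall j, (M < j)%nat -> u j = zero) -> is_series u (sum_n u M).
Proof.
  intros Hu. apply filterlim_ext_loc with (fun _ => sum_n u M); [|apply filterlim_const].
  exists M. intros n Hn. induction Hn as [|n Hn IH]; [reflexivity|].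
  rewrite sum_Sn, <- IH, Hu by lia. now rewrite plus_zero_r.
Qed.

Lemma series_nonneg (b : nat -> R) l : is_series b l -> (forall n, 0 <= b n) -> 0 <= l.
Proof.
  intros Hb Hpos. apply (is_lim_seq_le (fun _ => 0) (sum_n b) 0 l); [|apply is_lim_seq_const|exact Hb].
  intros n. rewrite sum_n_Reals. apply cond_pos_sum. exact Hpos.
Qed.

Lemma sum_f_R0_term_le (f : nat -> R) (N n : nat) :
  (forall k, 0 <= f k) -> (n <= N)%nat -> f n <= sum_f_R0 f N.
Proof.
  intros Hf Hn. induction Hn as [|N Hn IH].
  - destruct n as [|n]; simpl; [lra|]. pose proof (cond_pos_sum f n Hf). lra.
  - simpl. pose proof (Hf (S N)). lra.
Qed.

Lemma bounded_of_eventually (u : nat -> R) (m : nat) (M : R) :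
  (forall j, (m <= j)%nat -> u j <= M) -> exists K, forall j, u j <= K.
Proof.
  intros Hm. exists (Rmax M (sum_f_R0 (fun i => Rabs (u i)) m)). intros j.
  destruct (le_lt_dec m j) as [Hj|Hj].
  - eapply Rle_trans; [apply Hm, Hj|apply Rmax_l].
  - eapply Rle_trans; [|apply Rmax_r]. eapply Rle_trans; [apply Rle_abs|].
    apply (sum_f_R0_term_le (fun i => Rabs (u i))); [intros; apply Rabs_pos|lia].
Qed.

Lemma pow_1_minus_ge (x : R) (Q : nat) : 0 <= x <= 1 -> 1 - INR Q * x <= (1 - x) ^ Q.
Proof.
  intros Hx. induction Q as [|Q IH]; [simpl; lra|].
  rewrite S_INR, <- tech_pow_Rmult. pose proof (pos_INR Q). pose proof (pow_le (1 - x) Q ltac:(lra)). nra.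
Qed.

Lemma ex_series_terms_bounded (u : nat -> R) : ex_series u -> exists M, forall n, Rabs (u n) <= M.
Proof.
  intros Hu. destruct (filterlim_bounded u) as [M HM].
  - exists 0. apply ex_series_lim_0, Hu.
  - exists M. exact HM.
Qed.

Lemma is_lim_seq_inv_INR_plus (c : R) : is_lim_seq (fun n => / (INR n + c)) 0.
Proof.
  replace (Finite 0) with (Rbar_inv p_infty) by reflexivity.
  apply is_lim_seq_inv; [|discriminate].
  eapply is_lim_seq_plus; [apply is_lim_seq_INR|apply is_lim_seq_const|reflexivity].
Qed.

Lemma is_lim_seq_INR_ratio_pow (N : nat) :
  is_lim_seq (fun n => ((INR n + 2) / (INR n + 1)) ^ N) 1.
Proof.
  assert (Hratio : is_lim_seq (fun n => (INR n + 2) / (INR n + 1)) 1).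
  { apply is_lim_seq_ext with (fun n => 1 + / (INR n + 1)).
    - intros n. pose proof (pos_INR n). field. lra.
    - replace (Finite 1) with (Finite (1 + 0)) by (f_equal; ring).
      apply is_lim_seq_plus'; [apply is_lim_seq_const|apply is_lim_seq_inv_INR_plus]. }
  induction N as [|N IH]; simpl.
  - apply is_lim_seq_const.
  - replace (Finite 1) with (Finite (1 * 1)) by (f_equal; ring).
    apply is_lim_seq_mult'; assumption.
Qed.

Lemma CV_radius_poly (N : nat) : CV_radius (fun n => (INR n + 1) ^ N) = 1.
Proof.
  rewrite (CV_radius_finite_DAlembert _ 1); [now rewrite Rinv_1| |lra|].
  - intros n. apply pow_nonzero. pose proof (pos_INR n). lra.
  - apply is_lim_seq_ext with (fun n => ((INR n + 2) / (INR n + 1)) ^ N);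
      [|apply is_lim_seq_INR_ratio_pow].
    intros n. pose proof (pos_INR n).
    rewrite S_INR, Rabs_pos_eq by (apply Rdiv_le_0_compat; apply pow_le || apply pow_lt; lra).
    unfold Rdiv. rewrite Rpow_mult_distr, pow_inv. do 2 f_equal. ring.
Qed.

Lemma ex_series_poly_geom (N : nat) (x : R) : 0 <= x < 1 ->
  ex_series (fun n => (INR n + 1) ^ N * x ^ n).
Proof.
  intros Hx. assert (Hin : Rbar_lt (Rabs x) (CV_radius (fun n => (INR n + 1) ^ N))).
  { rewrite CV_radius_poly, Rabs_pos_eq by lra. simpl. lra. }
  destruct (CV_radius_inside _ _ Hin) as [l Hl]. exists l.
  revert Hl. apply is_series_ext. intros n. rewrite pow_n_pow. apply Rmult_comm.
Qed.

Lemma CV_radius_of_poly_bound (N : nat) (K : R) (u : nat -> R) :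
  (forall n, Rabs (u n) <= K * (INR n + 1) ^ N) ->
  forall x, Rabs x < 1 -> Rbar_lt (Rabs x) (CV_radius u).
Proof.
  intros HK x Hx. set (r := (Rabs x + 1) / 2).
  assert (Hr : 0 <= r < 1) by (unfold r; pose proof (Rabs_pos x); lra).
  destruct (ex_series_terms_bounded _ (ex_series_poly_geom N r Hr)) as [M HM].
  apply Rbar_lt_le_trans with r; [simpl; unfold r; lra|].
  apply (proj1 (CV_radius_bounded u)). exists (Rabs K * M). intros n.
  assert (Hn : 0 <= (INR n + 1) ^ N) by (apply pow_le; pose proof (pos_INR n); lra).
  rewrite Rabs_mult, (Rabs_pos_eq (r ^ n)) by (apply pow_le; lra).
  apply Rle_trans with (Rabs K * ((INR n + 1) ^ N * r ^ n)).
  - rewrite <- Rmult_assoc. apply Rmult_le_compat_r; [apply pow_le; lra|].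
    eapply Rle_trans; [apply HK|]. apply Rmult_le_compat_r; [exact Hn|apply Rle_abs].
  - apply Rmult_le_compat_l; [apply Rabs_pos|]. eapply Rle_trans; [apply Rle_abs|apply HM].
Qed.

Lemma ex_series_inv_sq : ex_series (fun j => / (INR j + 1) ^ 2).
Proof.
  assert (Htel : is_series (fun j => / (INR j + 1) - / (INR j + 2)) 1).
  { enough (H : is_lim_seq (sum_n (fun j => / (INR j + 1) - / (INR j + 2))) 1) by exact H.
    apply is_lim_seq_ext with (fun n => 1 - / (INR n + 2)).
    - intros n. rewrite sum_n_Reals. induction n as [|n IH]; [simpl; field|].
      rewrite tech5, <- IH, S_INR. pose proof (pos_INR n). field. lra.
    - replace (Finite 1) with (Finite (1 - 0)) by (f_equal; ring).
      apply is_lim_seq_minus'; [apply is_lim_seq_const|apply is_lim_seq_inv_INR_plus]. }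
  apply (ex_series_le (V := R_CompleteNormedModule)) with (fun j => 2 * (/ (INR j + 1) - / (INR j + 2))).
  - intros j. change (Rabs (/ (INR j + 1) ^ 2) <= 2 * (/ (INR j + 1) - / (INR j + 2))).
    pose proof (pos_INR j). rewrite Rabs_pos_eq by (apply Rlt_le, Rinv_0_lt_compat, pow_lt; lra).
    apply Rmult_le_reg_r with ((INR j + 1) ^ 2 * (INR j + 2));
      [apply Rmult_lt_0_compat; [apply pow_lt|]; lra|].
    field_simplify; lra.
  - exists (2 * 1). apply (is_series_scal_l (V := R_NormedModule) 2), Htel.
Qed.

Lemma sum_n_triangular_swap {G : AbelianMonoid} (u : nat -> nat -> G) (J : nat) :
  (forall j n, (j < n)%nat -> u j n = zero) ->
  sum_n (fun n => sum_n (fun j => u j n) J) J = sum_n (fun j => sum_n (u j) j) J.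
Proof.
  intros Hz. induction J as [|J IH]; [now rewrite !sum_O|].
  assert (Hcol : forall J' k, (J' < k)%nat -> sum_n (fun j => u j k) J' = zero).
  { intros J' k Hk. induction J' as [|J' IH']; [rewrite sum_O; apply Hz; lia|].
    rewrite sum_Sn, Hz, plus_zero_r by lia. apply IH'. lia. }
  rewrite (sum_Sn (fun j => sum_n (u j) j)), <- IH, (sum_Sn (u (S J))).
  rewrite (sum_Sn (fun n => sum_n (fun j => u j n) (S J))).
  rewrite (sum_n_ext (fun n => sum_n (fun j => u j n) (S J))
             (fun n => plus (sum_n (fun j => u j n) J) (u (S J) n))) by (intros; apply sum_Sn).
  rewrite sum_n_plus, sum_Sn, Hcol, plus_zero_l by lia. symmetry. apply plus_assoc.
Qed.

Lemma is_series_sum_n {K : AbsRing} {V : NormedModule K} (v : nat -> nat -> V) (L : nat -> V) (J : nat) :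
  (forall n, is_series (fun i => v i n) (L n)) ->
  is_series (fun i => sum_n (v i) J) (sum_n L J).
Proof.
  intros Hv. induction J as [|J IH].
  - rewrite sum_O. apply is_series_ext with (fun i => v i O); [intros; now rewrite sum_O|apply Hv].
  - rewrite sum_Sn. apply is_series_ext with (fun i => plus (sum_n (v i) J) (v i (S J))).
    + intros i. now rewrite sum_Sn.
    + apply is_series_plus; [exact IH|apply Hv].
Qed.

Lemma plus_minus_cancel {K : AbsRing} {V : NormedModule K} (x y : V) : plus (minus x y) y = x.
Proof. unfold minus. now rewrite <- plus_assoc, plus_opp_l, plus_zero_r. Qed.

Lemma is_series_triangular {K : AbsRing} {V : NormedModule K} (u : nat -> nat -> V) (T : nat -> V) (l : V) :
  (forall j n, (j < n)%nat -> u j n = zero) ->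
  ex_series (fun j => sum_n (fun n => norm (u j n)) j) ->
  (forall n, is_series (fun j => u j n) (T n)) ->
  is_series (fun j => sum_n (u j) j) l ->
  is_series T l.
Proof.
  intros Hz [SR HSR] HT Hl.
  set (Rw := fun j => sum_n (fun n => norm (u j n)) j) in HSR.
  set (tail := fun J => SR - sum_n Rw J).
  set (err := fun J => sum_n (fun n => minus (T n) (sum_n (fun j => u j n) J)) J).
  assert (Hdec : forall J, sum_n T J = plus (sum_n (fun j => sum_n (u j) j) J) (err J)).
  { intros J. unfold err. rewrite <- sum_n_triangular_swap by exact Hz.
    rewrite <- sum_n_plus. apply sum_n_ext. intros n. symmetry. rewrite plus_comm. apply plus_minus_cancel. }
  assert (Herr : forall J, norm (err J) <= tail J).
  { intros J.
    apply norm_series_le with (fun i => sum_n (fun n => u (S J + i)%nat n) J) (fun i => Rw (S J + i)%nat).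
    - apply is_series_sum_n. intros n. apply (is_series_incr_n (fun j => u j n)); [lia|]. simpl pred.
      rewrite (plus_minus_cancel (V := V)). apply HT.
    - apply (is_series_incr_n Rw); [lia|]. simpl pred. unfold tail.
      change (is_series Rw (plus (minus SR (sum_n Rw J)) (sum_n Rw J))).
      rewrite (plus_minus_cancel (V := R_NormedModule)). exact HSR.
    - intros i. eapply Rle_trans; [apply norm_sum_n_m|]. unfold Rw, sum_n.
      rewrite (sum_n_m_Chasles _ 0 J (S J + i)) by lia.
      assert (0 <= sum_n_m (fun n => norm (u (S J + i)%nat n)) (S J) (S J + i)).
      { rewrite sum_n_m_Reals by lia. apply cond_pos_sum. intros; apply norm_ge_0. }
      change (sum_n_m (fun n => norm (u (S J + i)%nat n)) 0 J <=
              sum_n_m (fun n => norm (u (S J + i)%nat n)) 0 J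
              + sum_n_m (fun n => norm (u (S J + i)%nat n)) (S J) (S J + i)). lra. }
  assert (Htail : is_lim_seq tail 0).
  { replace (Finite 0) with (Finite (SR - SR)) by (f_equal; ring).
    apply is_lim_seq_minus'; [apply is_lim_seq_const|exact HSR]. }
  assert (Herr0 : filterlim err eventually (locally (zero : V))).
  { apply filterlim_norm_zero.
    enough (H : is_lim_seq (fun J => norm (err J)) 0) by exact H.
    apply (is_lim_seq_le_le (fun _ => 0) _ tail); [|apply is_lim_seq_const|exact Htail].
    intros J. split; [apply norm_ge_0|apply Herr]. }
  apply filterlim_ext with (fun J => plus (sum_n (fun j => sum_n (u j) j) J) (err J));
    [intros J; now rewrite Hdec|].
  rewrite <- (plus_zero_r l).
  exact (filterlim_comp_2 _ _ plus Hl Herr0 (filterlim_plus l zero)).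
Qed.

(** * Taylor coefficients *)

Lemma sum_n_Re (a : nat -> C) N : Re (sum_n a N) = sum_n (fun n => Re (a n)) N.
Proof. induction N as [|N IH]; [now rewrite !sum_O|]. now rewrite !sum_Sn, <- IH. Qed.

Lemma sum_n_Im (a : nat -> C) N : Im (sum_n a N) = sum_n (fun n => Im (a n)) N.
Proof. induction N as [|N IH]; [now rewrite !sum_O|]. now rewrite !sum_Sn, <- IH. Qed.

Lemma is_series_C_Re_Im (a : nat -> C) (l : C) :
  is_series a l <-> is_series (fun n => Re (a n)) (Re l) /\ is_series (fun n => Im (a n)) (Im l).
Proof.
  unfold is_series. split.
  - intros H. split; apply filterlim_locally; intros eps;
      destruct (proj1 (filterlim_locally _ _) H eps) as [N HN]; exists N; intros n Hn;
      destruct (HN n Hn) as [H1 H2].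
    + change (ball (Re l) eps (sum_n (fun n => Re (a n)) n)). now rewrite <- sum_n_Re.
    + change (ball (Im l) eps (sum_n (fun n => Im (a n)) n)). now rewrite <- sum_n_Im.
  - intros [H1 H2]. apply filterlim_locally. intros eps.
    destruct (proj1 (filterlim_locally _ _) H1 eps) as [N1 HN1].
    destruct (proj1 (filterlim_locally _ _) H2 eps) as [N2 HN2].
    exists (max N1 N2). intros n Hn. split.
    + change (ball (Re l) eps (Re (sum_n a n))). rewrite sum_n_Re. apply HN1. lia.
    + change (ball (Im l) eps (Im (sum_n a n))). rewrite sum_n_Im. apply HN2. lia.
Qed.

Lemma ex_series_C_le (a : nat -> C) (b : nat -> R) :
  (forall n, Cmod (a n) <= b n) -> ex_series b -> exists l : C, is_series a l.
Proof.
  intros Hab Hb. destruct (ex_series_le (V := C_CompleteNormedModule) a b Hab Hb) as [l Hl].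
  exists l. exact Hl.
Qed.

Lemma pow_n_RtoC (x : R) n : pow_n (RtoC x) n = RtoC (x ^ n).
Proof.
  induction n as [|n IH]; [reflexivity|].
  change ((RtoC x * pow_n (RtoC x) n)%C = RtoC (x * x ^ n)). now rewrite IH, RtoC_mult.
Qed.

Lemma Cmod_pow_n (z : C) n : Cmod (pow_n z n) = Cmod z ^ n.
Proof.
  induction n as [|n IH]; [apply Cmod_1|].
  change (Cmod (z * pow_n z n)%C = Cmod z * Cmod z ^ n). now rewrite Cmod_mult, IH.
Qed.

Lemma im_le_Cmod (z : C) : Rabs (Im z) <= Cmod z.
Proof.
  destruct z as [a b]. unfold Cmod. simpl. rewrite <- sqrt_Rsqr_abs.
  apply sqrt_le_1_alt. unfold Rsqr. nra.
Qed.

Lemma PSeries_coef_eq_0 (d : nat -> R) :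
  (forall x, Rabs x < 1 -> is_series (fun n => d n * x ^ n) 0) -> forall n, d n = 0.
Proof.
  intros H n.
  assert (Hrad : Rbar_lt 0 (CV_radius d)).
  { apply Rbar_lt_le_trans with (1 / 2); [simpl; lra|].
    apply (proj1 (CV_radius_bounded d)).
    destruct (ex_series_terms_bounded (fun n => d n * (1 / 2) ^ n)) as [M HM];
      [exists 0; apply H; rewrite Rabs_pos_eq; lra|].
    exists M. exact HM. }
  assert (Hzero : Derive_n (PSeries d) n 0 = 0).
  { rewrite (Derive_n_ext_loc _ (fun _ => 0)); [destruct n; [reflexivity|apply Derive_n_const]|].
    exists (mkposreal 1 Rlt_0_1). intros y Hy. rewrite PSeries_eq.
    apply is_series_unique. apply is_series_ext with (fun k => d k * y ^ k).
    - intros k. rewrite (pow_n_pow y k). apply Rmult_comm.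
    - apply H. change (Rabs (y - 0) < 1) in Hy. now rewrite Rminus_0_r in Hy. }
  pose proof (Derive_n_coef d n Hrad) as Hcoef. rewrite Hzero in Hcoef.
  pose proof (INR_fact_neq_0 n). symmetry in Hcoef.
  apply Rmult_integral in Hcoef. destruct Hcoef; [assumption|contradiction].
Qed.

Lemma has_coeffs_unique (f : C -> C) (a b : nat -> C) :
  has_coeffs f a -> has_coeffs f b -> forall n, a n = b n.
Proof.
  intros Ha Hb n.
  assert (Hdiff : forall x, Rabs x < 1 ->
    is_series (fun n => (a n - b n)%C * pow_n (RtoC x) n)%C (RtoC 0)).
  { intros x Hx. assert (Hz : Cmod (RtoC x) < 1) by now rewrite Cmod_R.
    replace (RtoC 0) with (minus (f x) (f x)) by C_ring.
    apply is_series_ext with (fun n => minus (a n * pow_n (RtoC x) n)%C (b n * pow_n (RtoC x) n)%C).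
    - intros k. C_ring.
    - apply (is_series_minus (V := C_NormedModule)); [apply Ha|apply Hb]; exact Hz. }
  assert (Hparts : forall (p : C -> R), (p = Re \/ p = Im) -> p (a n - b n)%C = 0).
  { intros p Hp. apply (PSeries_coef_eq_0 (fun k => p (a k - b k)%C)). intros x Hx.
    destruct (proj1 (is_series_C_Re_Im _ _) (Hdiff x Hx)) as [Hre Him]. destruct Hp; subst p;
      [revert Hre|revert Him]; apply is_series_ext; intros k;
      rewrite pow_n_RtoC; simpl; ring. }
  pose proof (Hparts Re (or_introl eq_refl)) as Hre. pose proof (Hparts Im (or_intror eq_refl)) as Him.
  destruct (a n) as [a1 a2], (b n) as [b1 b2]. simpl in Hre, Him. f_equal; lra.
Qed.

Lemma sum_n_zero {G : AbelianMonoid} (a : nat -> G) (M : nat) :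
  (forall j, (j <= M)%nat -> a j = zero) -> sum_n a M = zero.
Proof.
  intros Ha. induction M as [|M IH]; [rewrite sum_O; apply Ha; lia|].
  rewrite sum_Sn, IH by (intros; apply Ha; lia). rewrite Ha by lia. apply plus_zero_l.
Qed.

Lemma has_coeffs_lin_comb (F : nat -> C -> C) (A : nat -> nat -> C) (c : nat -> C) (M : nat) :
  (forall k, has_coeffs (F k) (A k)) ->
  has_coeffs (fun z => sum_n (fun k => c k * F k z)%C M) (fun j => sum_n (fun k => c k * A k j)%C M).
Proof.
  intros HF z Hz.
  apply is_series_ext with (fun j => sum_n (fun k => c k * A k j * pow_n z j)%C M).
  - intros j. exact (sum_n_mult_r (K := C_Ring) (pow_n z j) (fun k => c k * A k j)%C M).
  - apply (is_series_sum_n (fun j k => c k * A k j * pow_n z j)%C (fun k => c k * F k z)%C).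
    intros k. apply is_series_ext with (fun j => scal (c k) (A k j * pow_n z j)%C);
      [intros j; apply Cmult_assoc|apply (is_series_scal (V := C_NormedModule)), HF, Hz].
Qed.

Lemma is_series_indicator (x : nat -> C) (j0 : nat) :
  is_series (fun j => (if Nat.eqb j j0 then RtoC 1 else RtoC 0) * x j)%C (x j0).
Proof.
  set (e := fun j => if Nat.eqb j j0 then RtoC 1 else RtoC 0).
  assert (He : forall j, j <> j0 -> (e j * x j)%C = zero).
  { intros j Hj. unfold e. destruct (Nat.eqb_spec j j0); [contradiction|]. apply Cmult_0_l. }
  replace (x j0) with (sum_n (fun j => e j * x j)%C j0).
  - apply (is_series_finite (V := C_NormedModule)). intros j Hj. apply He. lia.
  - destruct j0 as [|j0].
    + rewrite sum_O. unfold e. simpl. apply Cmult_1_l.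
    + rewrite sum_Sn, sum_n_zero by (intros j Hj; apply He; lia).
      unfold e. rewrite Nat.eqb_refl. C_ring.
Qed.

Lemma has_coeffs_monomial (j0 : nat) :
  has_coeffs (fun z => pow_n z j0) (fun j => if Nat.eqb j j0 then RtoC 1 else RtoC 0).
Proof. intros z _. apply (is_series_indicator (pow_n z)). Qed.

(** * Self-maps ψ_s of the disc *)

Lemma Cmod_lt_1 (z : C) : Re z ^ 2 + Im z ^ 2 < 1 -> Cmod z < 1.
Proof. intros H. unfold Cmod. rewrite <- sqrt_1. apply sqrt_lt_1_alt. split; [nra|exact H]. Qed.

Lemma Cmod_gt_1 (z : C) : 1 < Re z ^ 2 + Im z ^ 2 -> 1 < Cmod z.
Proof. intros H. unfold Cmod. rewrite <- sqrt_1. apply sqrt_lt_1_alt. split; [lra|exact H]. Qed.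

Lemma Cmod_1_plus_lt_1 (u : C) : Re u < 0 -> exists t, 0 < t /\ Cmod (1 + t * u)%C < 1.
Proof.
  intros Hu. destruct u as [a b]. simpl in Hu.
  exists (- a / (a ^ 2 + b ^ 2)). split; [apply Rdiv_lt_0_compat; nra|].
  apply Cmod_lt_1. unfold Re, Im, Cplus, Cmult, RtoC. cbn [fst snd].
  replace ((1 + (- a / (a ^ 2 + b ^ 2) * a - 0 * b)) ^ 2 + (0 + (- a / (a ^ 2 + b ^ 2) * b + 0 * a)) ^ 2)
    with (1 - a ^ 2 / (a ^ 2 + b ^ 2)) by (field; nra).
  assert (0 < a ^ 2 / (a ^ 2 + b ^ 2)) by (apply Rdiv_lt_0_compat; nra). lra.
Qed.

Lemma rotate_into_left_half_plane (w : C) : w <> RtoC 0 -> ~ (Im w = 0 /\ 0 < Re w) ->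
  exists v, 0 < Re v /\ Re (w * v)%C < 0.
Proof.
  intros Hw0 Hw. destruct w as [p q]. simpl in Hw.
  destruct (Req_dec q 0) as [Hq|Hq].
  - subst q. exists (RtoC 1). simpl. split; [lra|].
    destruct (Rtotal_order p 0) as [Hp|[Hp|Hp]]; [lra| |tauto].
    subst p. now contradiction Hw0.
  - exists (1, (Rabs p + 1) / q). simpl. split; [lra|].
    replace (p * 1 - q * ((Rabs p + 1) / q)) with (p - Rabs p - 1) by (field; exact Hq).
    pose proof (Rle_abs p). lra.
Qed.

Lemma Cinv_pos_real (s : C) : s <> RtoC 0 -> Im (/ s)%C = 0 /\ 0 < Re (/ s)%C -> Im s = 0 /\ 0 < Re s.
Proof.
  intros Hs [Him Hre]. destruct s as [a b]. simpl in *.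
  assert (Hn : 0 < a * (a * 1) + b * (b * 1)).
  { destruct (Req_dec a 0); destruct (Req_dec b 0); [subst; now contradiction Hs|nra|nra|nra]. }
  assert (Hb : b = 0).
  { apply Rmult_eq_reg_r with (- / (a * (a * 1) + b * (b * 1)));
      [|apply Ropp_neq_0_compat, Rinv_neq_0_compat; lra].
    unfold Rdiv in Him. lra. }
  subst b. split; [reflexivity|].
  apply Rmult_lt_reg_r with (/ (a * (a * 1) + 0 * (0 * 1))); [apply Rinv_0_lt_compat; lra|].
  unfold Rdiv in Hre. lra.
Qed.

Lemma psi_self_map_pos_real (s : C) : s <> RtoC 0 -> psi_self_map s -> Im s = 0 /\ 0 < Re s.
Proof.
  intros Hs0 Hpsi. apply Cinv_pos_real; [exact Hs0|]. apply NNPP. intros Hw.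
  assert (Hw0 : (/ s)%C <> RtoC 0).
  { intros E. apply (f_equal (Cmult s)) in E. rewrite Cinv_r, Cmult_0_r in E by exact Hs0.
    apply (f_equal Re) in E. simpl in E. lra. }
  (* For z = 1/(1 + v') we get 1/ψ_s(z) = 1 + v'/s, and v' can be chosen with Re v' > 0
     (so |z| < 1) and |1 + v'/s| < 1 (so |ψ_s(z)| > 1). *)
  destruct (rotate_into_left_half_plane _ Hw0 Hw) as [v [Hv Hwv]].
  destruct (Cmod_1_plus_lt_1 _ Hwv) as [t [Ht Hlt]].
  set (v' := (t * v)%C).
  assert (Hv' : 0 < Re v') by (unfold v'; destruct v as [v1 v2]; simpl in *; nra).
  assert (H1v : (1 + v')%C <> RtoC 0).
  { intros E. apply (f_equal Re) in E. change (1 + Re v' = 0) in E. lra. }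
  set (z := (/ (1 + v'))%C).
  assert (Hz : Cmod z < 1).
  { assert (Hgt : 1 < Cmod (1 + v')%C).
    { apply Cmod_gt_1. change (1 < (1 + Re v') ^ 2 + (0 + Im v') ^ 2). nra. }
    unfold z. rewrite Cmod_inv by exact H1v.
    assert (Hpos : 0 < 1 * Cmod (1 + v')%C) by (rewrite Rmult_1_l; lra).
    pose proof (Rinv_lt_contravar 1 _ Hpos Hgt) as Hinv. now rewrite Rinv_1 in Hinv. }
  destruct (Hpsi z Hz) as [Hden Hpsi_z].
  assert (Hsv : (s + v')%C <> RtoC 0).
  { intros E. apply Hden. replace (1 - (1 - s) * z)%C with ((s + v') * z)%C.
    - rewrite E. apply Cmult_0_l.
    - unfold z. field. exact H1v. }
  assert (Hprod : (psi s z * (1 + / s * v'))%C = RtoC 1).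
  { unfold psi, z. field. repeat split; try assumption.
    intros E. apply Hsv. rewrite <- E. ring. }
  apply (f_equal Cmod) in Hprod. rewrite Cmod_mult, Cmod_1 in Hprod.
  replace (/ s * v')%C with (t * (/ s * v))%C in Hprod by (unfold v'; ring).
  pose proof (Cmod_ge_0 (psi s z)). pose proof (Cmod_ge_0 (1 + t * (/ s * v))%C). nra.
Qed.

Lemma psi_self_map_unit_interval (s : C) : 0 < Cmod s -> Cmod s < 1 -> psi_self_map s ->
  s = RtoC (Re s) /\ 0 < Re s < 1.
Proof.
  intros Hs0 Hs1 Hpsi.
  assert (Hne : s <> RtoC 0) by (intros E; rewrite E, Cmod_0 in Hs0; lra).
  destruct (psi_self_map_pos_real s Hne Hpsi) as [Him Hre].
  destruct s as [a b]. simpl in Him, Hre |- *. subst b.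
  change (Cmod (RtoC a) < 1) in Hs1. rewrite Cmod_R, Rabs_pos_eq in Hs1 by lra. auto.
Qed.

(** * The binomial series *)

(* (c)_r / r!, the coefficient of t^r in (1 - t)^(-c). *)
Fixpoint nbinom (c : C) (r : nat) : C :=
  match r with
  | O => RtoC 1
  | S r' => (nbinom c r' * ((c + INR r') / RtoC (INR r' + 1)))%C
  end.

Lemma nbinom_S (c : C) (r : nat) :
  nbinom c (S r) = (nbinom c r * ((c + INR r) / RtoC (INR r + 1)))%C.
Proof. reflexivity. Qed.

Lemma nbinom_neq_0 (c : C) (r : nat) : Im c <> 0 -> nbinom c r <> RtoC 0.
Proof.
  intros Hc. induction r as [|r IH].
  - intros E. apply (f_equal Re) in E. simpl in E. lra.
  - pose proof (pos_INR r).
    rewrite nbinom_S. intros E. apply (f_equal Cmod) in E. rewrite Cmod_mult, Cmod_0 in E.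
    apply Rmult_integral in E. destruct E as [E|E]; apply Cmod_eq_0 in E; [exact (IH E)|].
    assert (Hd : RtoC (INR r + 1) <> RtoC 0) by (intros E'; apply RtoC_inj in E'; lra).
    apply (f_equal (fun z => Im (z * RtoC (INR r + 1))%C)) in E.
    replace ((c + INR r) / RtoC (INR r + 1) * RtoC (INR r + 1))%C with (c + INR r)%C in E
      by (field; exact Hd).
    simpl in E. unfold Im in Hc. lra.
Qed.

Lemma nbinom_neg_int (m : nat) : nbinom (RtoC (- INR m)) (S m) = RtoC 0.
Proof.
  rewrite nbinom_S. replace (RtoC (- INR m) + INR m)%C with (RtoC 0) by (rewrite <- RtoC_plus; f_equal; ring).
  unfold Cdiv. rewrite Cmult_0_l. apply Cmult_0_r.
Qed.

(* x^c for x > 0; meaningless for x <= 0, where [ln] returns junk. *)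
Definition Rpower_C (x : R) (c : C) : C :=
  (exp (Re c * ln x) * cos (Im c * ln x), exp (Re c * ln x) * sin (Im c * ln x)).

Lemma Rpower_C_add (x : R) (a b : C) : Rpower_C x (a + b)%C = (Rpower_C x a * Rpower_C x b)%C.
Proof.
  unfold Rpower_C. destruct a as [a1 a2], b as [b1 b2]. simpl.
  rewrite !Rmult_plus_distr_r, exp_plus, cos_plus, sin_plus.
  unfold Cmult. simpl. f_equal; ring.
Qed.

Lemma Rpower_C_INR (x : R) (n : nat) : 0 < x -> Rpower_C x (INR n) = RtoC (x ^ n).
Proof.
  intros Hx. unfold Rpower_C. simpl.
  rewrite Rmult_0_l, cos_0, sin_0, <- ln_pow, exp_ln by (try apply pow_lt; assumption).
  unfold RtoC. f_equal; ring.
Qed.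

Lemma Rpower_C_imag_period (x : R) (n : nat) : 0 < x -> x <> 1 ->
  Rpower_C x (INR n, 2 * PI / ln x) = RtoC (x ^ n).
Proof.
  intros Hx Hx1. assert (Hln : ln x <> 0).
  { intros E. apply Hx1. rewrite <- (exp_ln x Hx), E. apply exp_0. }
  rewrite <- Rpower_C_INR by exact Hx. unfold Rpower_C. simpl.
  replace (2 * PI / ln x * ln x) with (2 * PI) by (field; exact Hln).
  rewrite cos_2PI, sin_2PI, Rmult_0_l, cos_0, sin_0. reflexivity.
Qed.

Lemma Rpower_C_neq_0 (x : R) (c : C) : Rpower_C x c <> RtoC 0.
Proof.
  intros E. apply (f_equal Cmod) in E. rewrite Cmod_0 in E. unfold Rpower_C, Cmod in E. simpl in E.
  apply sqrt_eq_0 in E; [|nra].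
  pose proof (exp_pos (Re c * ln x)). pose proof (sin2_cos2 (Im c * ln x)). unfold Rsqr in *. nra.
Qed.

Lemma nbinom_poly_bound (c : C) (N : nat) : Cmod c <= INR N ->
  forall r, Cmod (nbinom c r) <= (INR r + 1) ^ N.
Proof.
  intros Hc r. induction r as [|r IH]; simpl nbinom.
  - rewrite Cmod_1. simpl INR. rewrite Rplus_0_l, pow1. lra.
  - pose proof (pos_INR r) as Hr. set (k := INR r + 1).
    assert (Hden : RtoC k <> RtoC 0) by (intros E; apply RtoC_inj in E; unfold k in E; lra).
    rewrite Cmod_mult, Cmod_div by exact Hden. rewrite Cmod_R, Rabs_pos_eq by (unfold k; lra).
    assert (Hnum : Cmod (c + INR r)%C <= INR N + INR r).
    { eapply Rle_trans; [apply Cmod_triangle|]. rewrite Cmod_R, Rabs_pos_eq by lra. lra. }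
    assert (Hbern : k ^ N * (k + INR N) <= k * (k + 1) ^ N).
    { assert (H := Rle_pow_lin (/ k) N ltac:(apply Rlt_le, Rinv_0_lt_compat; unfold k; lra)).
      replace (1 + / k) with ((k + 1) * / k) in H by (field; unfold k; lra).
      rewrite Rpow_mult_distr, pow_inv in H.
      assert (Hp : 0 < k ^ N) by (apply pow_lt; unfold k; lra).
      assert (Hk0 : k <> 0) by (unfold k; lra). assert (Hp0 : k ^ N <> 0) by lra.
      apply Rmult_le_reg_r with (/ (k * k ^ N));
        [apply Rinv_0_lt_compat, Rmult_lt_0_compat; [unfold k; lra|exact Hp]|].
      replace (k ^ N * (k + INR N) * / (k * k ^ N)) with (1 + INR N * / k) by (field; auto).
      replace (k * (k + 1) ^ N * / (k * k ^ N)) with ((k + 1) ^ N * / k ^ N) by (field; auto).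
      exact H. }
    rewrite S_INR. fold k.
    apply Rle_trans with (k ^ N * ((INR N + INR r) / k)).
    + apply Rmult_le_compat;
        [apply Cmod_ge_0|apply Rdiv_le_0_compat; [apply Cmod_ge_0|unfold k; lra]|exact IH|].
      apply Rmult_le_compat_r; [apply Rlt_le, Rinv_0_lt_compat; unfold k; lra|exact Hnum].
    + apply Rmult_le_reg_l with k; [unfold k; lra|].
      replace (k * (k ^ N * ((INR N + INR r) / k))) with (k ^ N * (INR N + INR r)) by (field; unfold k; lra).
      eapply Rle_trans; [|exact Hbern]. apply Rmult_le_compat_l; [apply pow_le; unfold k; lra|unfold k; lra].
Qed.

Lemma nbinom_Re_Im_CV_radius (c : C) (t : R) : Rabs t < 1 ->
  Rbar_lt (Rabs t) (CV_radius (fun r => Re (nbinom c r))) /\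
  Rbar_lt (Rabs t) (CV_radius (fun r => Im (nbinom c r))).
Proof.
  intros Ht. destruct (INR_unbounded (Cmod c)) as [N HN].
  pose proof (nbinom_poly_bound c N ltac:(lra)) as Hb.
  assert (H : forall p : C -> R, (forall z, Rabs (p z) <= Cmod z) ->
            Rbar_lt (Rabs t) (CV_radius (fun r => p (nbinom c r)))).
  { intros p Hp. apply (CV_radius_of_poly_bound N 1); [|exact Ht].
    intros r. rewrite Rmult_1_l. eapply Rle_trans; [apply Hp|apply Hb]. }
  split; apply H; [apply re_le_Cmod|apply im_le_Cmod].
Qed.

Definition is_derive_C (f : R -> C) (t : R) (l : C) : Prop :=
  is_derive (fun u => Re (f u)) t (Re l) /\ is_derive (fun u => Im (f u)) t (Im l).

Lemma is_derive_C_mult (f g : R -> C) (t : R) (df dg : C) :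
  is_derive_C f t df -> is_derive_C g t dg ->
  is_derive_C (fun u => f u * g u)%C t (df * g t + f t * dg)%C.
Proof.
  intros [Hf1 Hf2] [Hg1 Hg2].
  assert (Hmul : forall (p q : R -> R) dp dq, is_derive p t dp -> is_derive q t dq ->
            is_derive (fun u => p u * q u) t (dp * q t + p t * dq)).
  { intros p q dp dq Hp Hq. apply (is_derive_mult (K := R_AbsRing)); auto. intros; apply Rmult_comm. }
  assert (Hadd : forall (p q : R -> R) dp dq, is_derive p t dp -> is_derive q t dq ->
            is_derive (fun u => p u + q u) t (dp + dq)).
  { intros p q dp dq Hp Hq. exact (is_derive_plus (K := R_AbsRing) p q t dp dq Hp Hq). }
  assert (Hsub : forall (p q : R -> R) dp dq, is_derive p t dp -> is_derive q t dq ->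
            is_derive (fun u => p u - q u) t (dp - dq)).
  { intros p q dp dq Hp Hq. exact (is_derive_minus (K := R_AbsRing) p q t dp dq Hp Hq). }
  split.
  - apply (is_derive_ext (fun u => Re (f u) * Re (g u) - Im (f u) * Im (g u))); [reflexivity|].
    replace (Re (df * g t + f t * dg)%C)
      with ((Re df * Re (g t) + Re (f t) * Re dg) - (Im df * Im (g t) + Im (f t) * Im dg))
      by (destruct (f t), (g t), df, dg; simpl; ring).
    apply (Hsub (fun u => Re (f u) * Re (g u)) (fun u => Im (f u) * Im (g u))); apply Hmul; assumption.
  - apply (is_derive_ext (fun u => Re (f u) * Im (g u) + Im (f u) * Re (g u))); [reflexivity|].
    replace (Im (df * g t + f t * dg)%C)
      with ((Re df * Im (g t) + Re (f t) * Im dg) + (Im df * Re (g t) + Im (f t) * Re dg))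
      by (destruct (f t), (g t), df, dg; simpl; ring).
    apply (Hadd (fun u => Re (f u) * Im (g u)) (fun u => Im (f u) * Re (g u))); apply Hmul; assumption.
Qed.

Lemma is_derive_C_zero_const (f : R -> C) (a b : R) :
  (forall t, a <= t <= b -> is_derive_C f t (RtoC 0)) -> a < b -> f a = f b.
Proof.
  intros Hf Hab. apply injective_projections.
  - apply (eq_is_derive (fun u => Re (f u))); [intros t Ht; apply Hf, Ht|exact Hab].
  - apply (eq_is_derive (fun u => Im (f u))); [intros t Ht; apply Hf, Ht|exact Hab].
Qed.

Lemma PSeries_first_order_ode (u w : nat -> R) (t : R) :
  ex_pseries (PS_derive u) t -> ex_pseries w t ->
  (forall n, PS_derive u n = w n + INR n * u n) ->
  (1 - t) * PSeries (PS_derive u) t = PSeries w t.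
Proof.
  intros Hdu Hw Hrec.
  assert (Hshift : forall n, INR n * u n = PS_incr_1 (PS_derive u) n).
  { intros [|n]; [apply Rmult_0_l|reflexivity]. }
  assert (HD : PSeries (PS_derive u) t = PSeries w t + t * PSeries (PS_derive u) t).
  { rewrite <- PSeries_incr_1, <- PSeries_plus by (try apply ex_pseries_incr_1; assumption).
    apply PSeries_ext. intros n. unfold PS_plus. rewrite <- Hshift. apply Hrec. }
  lra.
Qed.

Definition binom_series (c : C) (t : R) : C :=
  (PSeries (fun r => Re (nbinom c r)) t, PSeries (fun r => Im (nbinom c r)) t).

Lemma nbinom_succ_mul (c : C) (r : nat) :
  (nbinom c (S r) * RtoC (INR (S r)))%C = (nbinom c r * (c + INR r))%C.
Proof.
  simpl nbinom. rewrite S_INR. field.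
  intros E. apply RtoC_inj in E. pose proof (pos_INR r). lra.
Qed.

Lemma is_derive_C_binom_series (c : C) (t : R) : Rabs t < 1 ->
  is_derive_C (binom_series c) t ((c * binom_series c t) * RtoC (/ (1 - t)))%C.
Proof.
  intros Ht. destruct (nbinom_Re_Im_CV_radius c t Ht) as [Hre Him].
  assert (Ht1 : 1 - t <> 0) by (apply Rabs_lt_between in Ht; lra).
  set (gr := fun r => Re (nbinom c r)). set (gi := fun r => Im (nbinom c r)).
  assert (Hex : ex_pseries gr t /\ ex_pseries gi t) by (split; apply CV_radius_inside; assumption).
  assert (Hlin : forall a b, PSeries (PS_plus (PS_scal a gr) (PS_scal b gi)) t
                              = a * PSeries gr t + b * PSeries gi t).
  { intros a b. rewrite PSeries_plus, !PSeries_scal; [reflexivity| |];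
      apply ex_pseries_scal; try apply Rmult_comm; apply Hex. }
  assert (Hode : forall (g : nat -> R) a b, Rbar_lt (Rabs t) (CV_radius g) ->
            (forall n, PS_derive g n = a * gr n + b * gi n + INR n * g n) ->
            is_derive (PSeries g) t ((a * PSeries gr t + b * PSeries gi t) / (1 - t))).
  { intros g a b Hg Hrec.
    assert (E : PSeries (PS_derive g) t = (a * PSeries gr t + b * PSeries gi t) / (1 - t)).
    { rewrite <- Hlin, <- (PSeries_first_order_ode g (PS_plus (PS_scal a gr) (PS_scal b gi)) t
                               (ex_pseries_derive _ _ Hg)).
      - field. exact Ht1.
      - apply ex_pseries_plus; apply ex_pseries_scal; try apply Rmult_comm; apply Hex.
      - intros n. rewrite Hrec. reflexivity. }
    rewrite <- E. apply is_derive_PSeries, Hg. }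
  assert (Hcoef : forall n, PS_derive gr n = Re c * gr n - Im c * gi n + INR n * gr n /\
                            PS_derive gi n = Im c * gr n + Re c * gi n + INR n * gi n).
  { intros n. pose proof (nbinom_succ_mul c n) as E. unfold PS_derive, gr, gi.
    destruct (nbinom c (S n)) as [x1 x2], (nbinom c n) as [y1 y2], c as [c1 c2].
    unfold Cmult, Cplus, RtoC in E. simpl in E |- *. injection E as E1 E2. split; nra. }
  split.
  - replace (Re (c * binom_series c t * RtoC (/ (1 - t)))%C)
      with ((Re c * PSeries gr t + - Im c * PSeries gi t) / (1 - t))
      by (unfold binom_series, gr, gi, Cmult, RtoC, Re, Im; simpl; field; exact Ht1).
    apply (Hode gr); [exact Hre|]. intros n. rewrite (proj1 (Hcoef n)). ring.
  - replace (Im (c * binom_series c t * RtoC (/ (1 - t)))%C)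
      with ((Im c * PSeries gr t + Re c * PSeries gi t) / (1 - t))
      by (unfold binom_series, gr, gi, Cmult, RtoC, Re, Im; simpl; field; exact Ht1).
    apply (Hode gi); [exact Him|]. intros n. rewrite (proj2 (Hcoef n)). ring.
Qed.

Lemma is_derive_C_Rpower_C_1_minus (c : C) (t : R) : t < 1 ->
  is_derive_C (fun u => Rpower_C (1 - u) c) t ((- c * Rpower_C (1 - t) c) * RtoC (/ (1 - t)))%C.
Proof.
  intros Ht. destruct c as [a b]. unfold is_derive_C, Rpower_C, Re, Im. simpl.
  split; auto_derive; try lra; unfold Rminus; field; lra.
Qed.

Lemma is_series_nbinom (c : C) (t : R) : 0 < t < 1 ->
  is_series (fun r => nbinom c r * RtoC (t ^ r))%C (/ Rpower_C (1 - t) c)%C.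
Proof.
  intros Ht.
  assert (Hprod : forall u, 0 <= u <= t ->
            is_derive_C (fun v => binom_series c v * Rpower_C (1 - v) c)%C u (RtoC 0)).
  { intros u Hu. assert (Hu1 : Rabs u < 1) by (rewrite Rabs_pos_eq; lra).
    pose proof (is_derive_C_mult _ _ u _ _ (is_derive_C_binom_series c u Hu1)
                  (is_derive_C_Rpower_C_1_minus c u ltac:(lra))) as H.
    replace (RtoC 0) with (c * binom_series c u * RtoC (/ (1 - u)) * Rpower_C (1 - u) c +
                           binom_series c u * (- c * Rpower_C (1 - u) c * RtoC (/ (1 - u))))%C
      by ring.
    exact H. }
  assert (H1 : (binom_series c t * Rpower_C (1 - t) c)%C = RtoC 1).
  { rewrite <- (is_derive_C_zero_const _ 0 t Hprod ltac:(lra)).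
    unfold binom_series, Rpower_C. rewrite !PSeries_0, Rminus_0_r, ln_1, !Rmult_0_r, exp_0, cos_0, sin_0.
    unfold Cmult, RtoC; simpl. f_equal; ring. }
  assert (Hseries : is_series (fun r => nbinom c r * RtoC (t ^ r))%C (binom_series c t)).
  { assert (Ht' : Rabs t < 1) by (rewrite Rabs_pos_eq; lra).
    destruct (nbinom_Re_Im_CV_radius c t Ht') as [Hre Him].
    apply is_series_C_Re_Im. split;
      [apply is_series_ext with (2 := PSeries_correct _ _ (CV_radius_inside _ _ Hre))
      |apply is_series_ext with (2 := PSeries_correct _ _ (CV_radius_inside _ _ Him))];
      intros r; rewrite pow_n_pow; destruct (nbinom c r); unfold scal; simpl; unfold mult; simpl; ring. }
  replace (/ Rpower_C (1 - t) c)%C with (binom_series c t); [exact Hseries|].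
  rewrite <- (Cmult_1_l (/ Rpower_C (1 - t) c)), <- H1. field. apply Rpower_C_neq_0.
Qed.

(** * The matrix of C_ψ *)

Fixpoint nbinomR (x : R) (r : nat) : R :=
  match r with
  | O => 1
  | S r' => nbinomR x r' * ((x + INR r') / (INR r' + 1))
  end.

Lemma nbinomR_S (x : R) (r : nat) : nbinomR x (S r) = nbinomR x r * ((x + INR r) / (INR r + 1)).
Proof. reflexivity. Qed.

Lemma nbinomR_nonneg (x : R) (r : nat) : 0 <= x -> 0 <= nbinomR x r.
Proof.
  intros Hx. induction r as [|r IH]; simpl; [lra|]. pose proof (pos_INR r).
  apply Rmult_le_pos; [exact IH|apply Rdiv_le_0_compat; lra].
Qed.

Lemma nbinomR_0_S (r : nat) : nbinomR 0 (S r) = 0.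
Proof. induction r as [|r IH]; [simpl; field|]. simpl in *. rewrite IH. ring. Qed.

Lemma nbinomR_shift (x : R) (r : nat) : x * nbinomR (x + 1) r = nbinomR x r * (x + INR r).
Proof.
  induction r as [|r IH]; [simpl; ring|]. simpl nbinomR. pose proof (pos_INR r).
  replace (x * (nbinomR (x + 1) r * ((x + 1 + INR r) / (INR r + 1))))
    with (x * nbinomR (x + 1) r * ((x + 1 + INR r) / (INR r + 1))) by ring.
  rewrite IH, S_INR. field. lra.
Qed.

Lemma nbinomR_pascal (x : R) (r : nat) :
  nbinomR (x + 1) (S r) = nbinomR (x + 1) r + nbinomR x (S r).
Proof.
  simpl nbinomR. pose proof (pos_INR r). pose proof (nbinomR_shift x r) as Hs.
  replace (nbinomR x r * ((x + INR r) / (INR r + 1))) with (nbinomR x r * (x + INR r) / (INR r + 1))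
    by (field; lra).
  rewrite <- Hs. field. lra.
Qed.

(* s^n (1 - s)^(j - n) binom(j - 1, n - 1) = [z^j] ψ_s(z)^n, see [is_series_psi_pow]. *)
Definition psi_coef (s : R) (j n : nat) : R :=
  if (n <=? j)%nat then s ^ n * (1 - s) ^ (j - n) * nbinomR (INR n) (j - n) else 0.

Lemma psi_coef_lt (s : R) (j n : nat) : (j < n)%nat -> psi_coef s j n = 0.
Proof. intros H. unfold psi_coef. destruct (Nat.leb_spec n j); [lia|reflexivity]. Qed.

Lemma psi_coef_col_0 (s : R) (j : nat) : psi_coef s j 0 = if Nat.eqb j 0 then 1 else 0.
Proof.
  unfold psi_coef. rewrite Nat.sub_0_r. change (INR 0) with 0.
  destruct j as [|j]; simpl Nat.leb; simpl Nat.eqb; cbv iota; [simpl; ring|].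
  rewrite nbinomR_0_S. ring.
Qed.

Lemma psi_coef_diag_shift (s : R) (n r : nat) :
  psi_coef s (n + r) n = s ^ n * (1 - s) ^ r * nbinomR (INR n) r.
Proof.
  unfold psi_coef. destruct (Nat.leb_spec n (n + r)); [|lia].
  now replace (n + r - n)%nat with r by lia.
Qed.

Lemma psi_coef_pascal (s : R) (j n : nat) :
  psi_coef s (S j) (S n) = (1 - s) * psi_coef s j (S n) + s * psi_coef s j n.
Proof.
  destruct (le_lt_dec (S n) j) as [Hnj|Hjn].
  - replace j with (S n + (j - S n))%nat by lia. set (r := (j - S n)%nat).
    replace (S (S n + r)) with (S n + S r)%nat by lia.
    replace (S n + r)%nat with (n + S r)%nat at 2 by lia.
    rewrite !psi_coef_diag_shift, S_INR, nbinomR_pascal. simpl. ring.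
  - rewrite (psi_coef_lt s j (S n)) by lia.
    destruct (Nat.eq_dec n j) as [->|Hne]; [|rewrite !psi_coef_lt by lia; ring].
    pose proof (psi_coef_diag_shift s (S j) 0) as H1. pose proof (psi_coef_diag_shift s j 0) as H2.
    rewrite Nat.add_0_r in H1, H2. rewrite H1, H2. simpl. ring.
Qed.

Lemma psi_coef_nonneg (s : R) (j n : nat) : 0 <= s <= 1 -> 0 <= psi_coef s j n.
Proof.
  intros Hs. unfold psi_coef. destruct (n <=? j)%nat; [|lra].
  apply Rmult_le_pos; [apply Rmult_le_pos; apply pow_le; lra|apply nbinomR_nonneg, pos_INR].
Qed.

Lemma psi_coef_row_sum (s : R) (j : nat) :
  sum_f_R0 (psi_coef s j) j = if Nat.eqb j 0 then 1 else s.
Proof.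
  induction j as [|j IH]; [simpl; apply psi_coef_col_0|].
  rewrite decomp_sum by lia. simpl pred. rewrite psi_coef_col_0. simpl Nat.eqb.
  rewrite (sum_eq _ (fun i => psi_coef s j (S i) * (1 - s) + psi_coef s j i * s))
    by (intros; rewrite psi_coef_pascal; ring).
  rewrite plus_sum, <- !scal_sum.
  assert (Hshift : sum_f_R0 (fun i => psi_coef s j (S i)) j = sum_f_R0 (psi_coef s j) j - psi_coef s j 0).
  { destruct j as [|j]; [simpl; rewrite psi_coef_lt by lia; ring|].
    rewrite tech5, (psi_coef_lt s (S j) (S (S j))) by lia.
    rewrite (decomp_sum (psi_coef s (S j)) (S j)) by lia. simpl pred. ring. }
  rewrite Hshift, IH, psi_coef_col_0. destruct (Nat.eqb j 0); ring.
Qed.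

Lemma psi_coef_le_1 (s : R) (j n : nat) : 0 < s < 1 -> psi_coef s j n <= 1.
Proof.
  intros Hs. destruct (le_lt_dec n j) as [Hn|Hn]; [|rewrite psi_coef_lt by exact Hn; lra].
  apply Rle_trans with (sum_f_R0 (psi_coef s j) j).
  - apply sum_f_R0_term_le; [intros; apply psi_coef_nonneg; lra|exact Hn].
  - rewrite psi_coef_row_sum. destruct (Nat.eqb j 0); lra.
Qed.

Lemma psi_denominator_neq_0 (s : R) (z : C) : 0 < s < 1 -> Cmod z < 1 ->
  (1 - (1 - s) * z)%C <> RtoC 0.
Proof.
  intros Hs Hz E.
  assert (E' : ((1 - s) * z)%C = RtoC 1).
  { replace ((1 - s) * z)%C with (RtoC 1 - (1 - (1 - s) * z))%C by ring. rewrite E. ring. }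
  apply (f_equal Cmod) in E'. rewrite Cmod_mult, Cmod_1 in E'.
  rewrite <- RtoC_minus, Cmod_R, Rabs_pos_eq in E' by lra.
  pose proof (Cmod_ge_0 z). nra.
Qed.

Lemma is_series_psi_pow (s : R) (z : C) (n : nat) : 0 < s < 1 -> Cmod z < 1 ->
  is_series (fun j => RtoC (psi_coef s j n) * pow_n z j)%C (pow_n (psi (RtoC s) z) n).
Proof.
  intros Hs Hz. induction n as [|n IH].
  - replace (pow_n (psi (RtoC s) z) 0) with (sum_n (fun j => RtoC (psi_coef s j 0) * pow_n z j)%C 0).
    + apply (is_series_finite (V := C_NormedModule)). intros j Hj.
      rewrite psi_coef_col_0. destruct (Nat.eqb_spec j 0); [lia|]. apply Cmult_0_l.
    + rewrite sum_O, psi_coef_col_0. simpl. apply Cmult_1_l.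
  - set (u := fun j => (RtoC (psi_coef s j (S n)) * pow_n z j)%C).
    destruct (ex_series_C_le u (fun j => Cmod z ^ j)) as [L HL].
    { intros j. unfold u.
      rewrite Cmod_mult, Cmod_R, Cmod_pow_n, Rabs_pos_eq by (apply psi_coef_nonneg; lra).
      pose proof (psi_coef_le_1 s j (S n) Hs). pose proof (pow_le (Cmod z) j (Cmod_ge_0 z)). nra. }
    { apply ex_series_geom. rewrite Rabs_pos_eq; [exact Hz|apply Cmod_ge_0]. }
    assert (Hshift : is_series (fun j => u (S j)) L).
    { assert (E : plus L (u O) = L).
      { unfold u. rewrite psi_coef_lt by lia. C_ring. }
      rewrite <- E in HL. exact (is_series_incr_1 u L HL). }
    assert (Hrec : is_series (fun j => u (S j))
                     (RtoC (1 - s) * z * L + RtoC s * z * pow_n (psi (RtoC s) z) n)%C).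
    { apply is_series_ext with (fun j => plus (scal (RtoC (1 - s) * z)%C (u j))
                                               (scal (RtoC s * z)%C (RtoC (psi_coef s j n) * pow_n z j)%C)).
      - intros j. unfold u. rewrite psi_coef_pascal, RtoC_plus, !RtoC_mult. C_ring.
      - apply (is_series_plus (V := C_NormedModule));
          apply (is_series_scal (V := C_NormedModule)); assumption. }
    replace (pow_n (psi (RtoC s) z) (S n)) with L; [exact HL|].
    pose proof (is_series_unique_gen _ _ _ Hshift Hrec) as EL.
    pose proof (psi_denominator_neq_0 s z Hs Hz) as Hden.
    set (D := (1 - (1 - s) * z)%C) in Hden. set (F := pow_n (psi (RtoC s) z) n) in EL.
    assert (ELD : (L * D)%C = (RtoC s * z * F)%C).
    { transitivity (L - RtoC (1 - s) * z * L)%C; [unfold D; rewrite RtoC_minus; ring|].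
      rewrite EL at 1. ring. }
    change (L = psi (RtoC s) z * F)%C.
    transitivity (L * D / D)%C; [field; exact Hden|].
    rewrite ELD. unfold psi. fold D. field. exact Hden.
Qed.

Definition poly_bounded (N : nat) (a : nat -> C) : Prop :=
  exists K, forall n, Cmod (a n) <= K * (INR n + 1) ^ N.

Definition comp_coef (s : R) (a : nat -> C) (j : nat) : C :=
  sum_n (fun n => RtoC (psi_coef s j n) * a n)%C j.

Lemma poly_bound_mono (N : nat) (K : R) (a : nat -> C) (n j : nat) :
  (forall n, Cmod (a n) <= K * (INR n + 1) ^ N) -> (n <= j)%nat ->
  Cmod (a n) <= K * (INR j + 1) ^ N.
Proof.
  intros Ha Hnj. eapply Rle_trans; [apply Ha|]. apply Rmult_le_compat_l.
  - specialize (Ha O). simpl in Ha. rewrite Rplus_0_l, pow1, Rmult_1_r in Ha.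
    pose proof (Cmod_ge_0 (a O)). lra.
  - apply pow_incr. apply le_INR in Hnj. pose proof (pos_INR n). lra.
Qed.

Lemma sum_psi_coef_Cmod_le (s : R) (a : nat -> C) (N : nat) (K : R) (j : nat) : 0 < s < 1 ->
  (forall n, Cmod (a n) <= K * (INR n + 1) ^ N) ->
  sum_n (fun n => Cmod (RtoC (psi_coef s j n) * a n)%C) j <= K * (INR j + 1) ^ N.
Proof.
  intros Hs Ha. set (B := K * (INR j + 1) ^ N).
  assert (HB : 0 <= B).
  { pose proof (poly_bound_mono N K a 0 j Ha ltac:(lia)). pose proof (Cmod_ge_0 (a O)). unfold B. lra. }
  rewrite sum_n_Reals.
  apply Rle_trans with (sum_f_R0 (fun n => psi_coef s j n * B) j).
  - apply sum_Rle. intros n Hn.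
    rewrite Cmod_mult, Cmod_R, Rabs_pos_eq by (apply psi_coef_nonneg; lra).
    apply Rmult_le_compat_l; [apply psi_coef_nonneg; lra|apply (poly_bound_mono N K a n j Ha Hn)].
  - rewrite <- scal_sum, psi_coef_row_sum.
    destruct (Nat.eqb j 0); rewrite ?Rmult_1_r; [lra|]. rewrite <- (Rmult_1_r B) at 2.
    apply Rmult_le_compat_l; lra.
Qed.

Lemma poly_bounded_comp_coef (s : R) (N : nat) (a : nat -> C) : 0 < s < 1 ->
  poly_bounded N a -> poly_bounded N (comp_coef s a).
Proof.
  intros Hs [K Ha]. exists K. intros j.
  eapply Rle_trans; [apply (norm_sum_n_m (V := C_NormedModule))|].
  apply sum_psi_coef_Cmod_le; assumption.
Qed.

Lemma has_coeffs_comp_op (s : R) (N : nat) (h : C -> C) (a : nat -> C) :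
  0 < s < 1 -> psi_self_map (RtoC s) -> has_coeffs h a -> poly_bounded N a ->
  has_coeffs (comp_op (psi (RtoC s)) h) (comp_coef s a).
Proof.
  intros Hs Hpsi Hh [K Ha] z Hz.
  destruct (Hpsi z Hz) as [_ Hw]. set (w := psi (RtoC s) z) in *.
  set (u := fun j n => (RtoC (psi_coef s j n) * a n * pow_n z j)%C).
  assert (Hrow : forall j, sum_n (fun n => Cmod (u j n)) j <= K * (INR j + 1) ^ N * Cmod z ^ j).
  { intros j. unfold u. rewrite (sum_n_ext _ (fun n => Cmod (RtoC (psi_coef s j n) * a n)%C * Cmod z ^ j))
      by (intros n; now rewrite Cmod_mult, Cmod_pow_n).
    rewrite (sum_n_mult_r (K := R_Ring)). apply Rmult_le_compat_r; [apply pow_le, Cmod_ge_0|].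
    apply sum_psi_coef_Cmod_le; assumption. }
  assert (Hgeom : ex_series (fun j => K * (INR j + 1) ^ N * Cmod z ^ j)).
  { destruct (ex_series_poly_geom N (Cmod z) (conj (Cmod_ge_0 z) Hz)) as [l Hl].
    exists (K * l). apply is_series_ext with (fun j => scal K ((INR j + 1) ^ N * Cmod z ^ j)).
    - intros j. unfold scal; simpl; unfold mult; simpl. ring.
    - apply (is_series_scal (V := R_NormedModule)), Hl. }
  assert (Hrowsum : forall j, sum_n (u j) j = (comp_coef s a j * pow_n z j)%C).
  { intros j. exact (sum_n_mult_r (K := C_Ring) (pow_n z j) _ j). }
  destruct (ex_series_C_le (fun j => comp_coef s a j * pow_n z j)%C
              (fun j => K * (INR j + 1) ^ N * Cmod z ^ j)) as [l Hl]; [|exact Hgeom|].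
  { intros j. rewrite <- Hrowsum. eapply Rle_trans; [apply (norm_sum_n_m (V := C_NormedModule))|apply Hrow]. }
  assert (HT : is_series (fun n => a n * pow_n w n)%C l).
  { apply (is_series_triangular u).
    - intros j n Hjn. unfold u. rewrite psi_coef_lt by exact Hjn. C_ring.
    - apply (ex_series_le (V := R_CompleteNormedModule)) with (2 := Hgeom). intros j.
      change (Rabs (sum_n (fun n => Cmod (u j n)) j) <= K * (INR j + 1) ^ N * Cmod z ^ j).
      rewrite Rabs_pos_eq; [apply Hrow|]. rewrite sum_n_Reals. apply cond_pos_sum. intros; apply Cmod_ge_0.
    - intros n. apply is_series_ext with (fun j => scal (a n) (RtoC (psi_coef s j n) * pow_n z j)%C).
      + intros j. unfold u. C_ring.
      + apply (is_series_scal (V := C_NormedModule)), is_series_psi_pow; assumption.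
    - apply is_series_ext with (2 := Hl). intros j. symmetry. apply Hrowsum. }
  unfold comp_op. fold w. rewrite (is_series_unique_gen _ _ _ (Hh w Hw) HT). exact Hl.
Qed.

(** * Eigenvectors of the adjoint *)

(* Σ_{j >= 1} eigen_seq α j x^(j - 1) = (1 - x)^(α - 1). *)
Definition eigen_seq (alpha : C) (j : nat) : C :=
  match j with O => RtoC 0 | S k => nbinom (1 - alpha) k end.

Lemma eigen_seq_succ (alpha : C) (k : nat) : (1 <= k)%nat ->
  eigen_seq alpha (S k) = (eigen_seq alpha k * ((INR k - alpha) / RtoC (INR k)))%C.
Proof.
  intros Hk. destruct k as [|k]; [lia|]. unfold eigen_seq. simpl nbinom at 1.
  rewrite S_INR. f_equal. f_equal. rewrite RtoC_plus. ring.
Qed.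

Lemma eigen_seq_nbinomR (alpha : C) (k r : nat) :
  (eigen_seq alpha (S k + r) * RtoC (nbinomR (INR (S k)) r))%C
  = (eigen_seq alpha (S k) * nbinom (INR (S k) - alpha) r)%C.
Proof.
  induction r as [|r IH].
  - rewrite Nat.add_0_r. simpl nbinomR. simpl nbinom. ring.
  - replace (S k + S r)%nat with (S (S k + r)) by lia.
    set (X := INR (S k)) in *. rewrite eigen_seq_succ, nbinomR_S, nbinom_S, plus_INR by lia. fold X.
    assert (HX : 1 <= X) by (unfold X; rewrite S_INR; pose proof (pos_INR k); lra).
    pose proof (pos_INR r).
    assert (H1 : RtoC (X + INR r) <> RtoC 0) by (intros E; apply RtoC_inj in E; lra).
    assert (H2 : RtoC (INR r + 1) <> RtoC 0) by (intros E; apply RtoC_inj in E; lra).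
    transitivity ((eigen_seq alpha (S k + r) * RtoC (nbinomR X r))
                  * ((X - alpha + INR r) / RtoC (INR r + 1)))%C.
    + rewrite RtoC_mult, RtoC_div by lra. rewrite !RtoC_plus in *. field. split; assumption.
    + rewrite IH. ring.
Qed.

Lemma is_series_eigen_seq_psi_coef (s : R) (alpha : C) (n : nat) : 0 < s < 1 ->
  is_series (fun j => eigen_seq alpha j * RtoC (psi_coef s j n))%C (Rpower_C s alpha * eigen_seq alpha n)%C.
Proof.
  intros Hs. destruct n as [|k].
  - replace (Rpower_C s alpha * eigen_seq alpha 0)%C
      with (sum_n (fun j => eigen_seq alpha j * RtoC (psi_coef s j 0))%C 0).
    + apply (is_series_finite (V := C_NormedModule)). intros j Hj.
      rewrite psi_coef_col_0. destruct (Nat.eqb_spec j 0); [lia|]. apply Cmult_0_r.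
    + rewrite sum_O. C_ring.
  - apply (is_series_decr_n _ (S k)); [lia|]. simpl pred.
    rewrite sum_n_zero by (intros j Hj; rewrite psi_coef_lt by lia; apply Cmult_0_r).
    match goal with |- is_series _ ?l =>
      replace l with (Rpower_C s alpha * eigen_seq alpha (S k))%C by C_ring end.
    assert (HX : RtoC (s ^ S k) = (Rpower_C s (INR (S k) - alpha) * Rpower_C s alpha)%C).
    { rewrite <- Rpower_C_INR, <- Rpower_C_add by lra. f_equal. ring. }
    set (X := INR (S k)) in *.
    pose proof (is_series_nbinom (X - alpha) (1 - s) ltac:(lra)) as H.
    replace (1 - (1 - s)) with s in H by ring.
    apply (is_series_scal (V := C_NormedModule) (RtoC (s ^ S k) * eigen_seq alpha (S k))%C) in H.
    match type of H with is_series _ ?l =>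
      replace l with (Rpower_C s alpha * eigen_seq alpha (S k))%C in H end.
    + apply is_series_ext with (2 := H). intros r.
      rewrite psi_coef_diag_shift, !RtoC_mult. fold X.
      change ((RtoC (s ^ S k) * eigen_seq alpha (S k)) * (nbinom (X - alpha) r * RtoC ((1 - s) ^ r))
              = eigen_seq alpha (S k + r) * (RtoC (s ^ S k) * RtoC ((1 - s) ^ r) * RtoC (nbinomR X r)))%C.
      transitivity (RtoC (s ^ S k) * RtoC ((1 - s) ^ r) * (eigen_seq alpha (S k + r) * RtoC (nbinomR X r)))%C;
        [rewrite eigen_seq_nbinomR; fold X; ring|ring].
    + change (Rpower_C s alpha * eigen_seq alpha (S k)
              = (RtoC (s ^ S k) * eigen_seq alpha (S k)) * / Rpower_C s (X - alpha))%C.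
      rewrite HX. field. apply Rpower_C_neq_0.
Qed.

Definition decays (Q : nat) (v : nat -> C) : Prop :=
  exists K, forall j, Cmod (v j) * (INR j + 1) ^ Q <= K.

Lemma Cmod_sub_le (k Q : R) (alpha : C) : 0 <= Q -> Q + Rabs (Im alpha) <= Re alpha -> Re alpha <= k ->
  Cmod (RtoC k - alpha)%C <= k - Q.
Proof.
  intros HQ Ha Hk. destruct alpha as [a b]. simpl in Ha, Hk. pose proof (Rabs_pos b).
  assert (Hb : b * b <= (a - Q) * (a - Q)).
  { replace (b * b) with (Rabs b * Rabs b) by (rewrite <- Rabs_mult; apply Rabs_pos_eq; nra). nra. }
  unfold Cmod. rewrite <- (sqrt_Rsqr (k - Q)) by lra.
  apply sqrt_le_1_alt. unfold Rsqr. simpl. nra.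
Qed.

Lemma pow_succ_le (k : R) (Q : nat) : 1 <= k -> (k - INR Q) * (k + 1) ^ Q <= k * k ^ Q.
Proof.
  intros Hk. pose proof (pos_INR Q).
  assert (Hx : 0 <= / (k + 1) <= 1).
  { split; [apply Rlt_le, Rinv_0_lt_compat; lra|].
    apply Rmult_le_reg_l with (k + 1); [lra|]. rewrite Rinv_r; lra. }
  pose proof (pow_1_minus_ge (/ (k + 1)) Q Hx) as Hbern.
  replace (1 - / (k + 1)) with (k * / (k + 1)) in Hbern by (field; lra).
  rewrite Rpow_mult_distr, pow_inv in Hbern.
  assert (Hp : 0 < (k + 1) ^ Q) by (apply pow_lt; lra).
  apply Rmult_le_reg_r with (/ (k + 1) ^ Q); [apply Rinv_0_lt_compat, Hp|].
  replace ((k - INR Q) * (k + 1) ^ Q * / (k + 1) ^ Q) with (k - INR Q) by (field; lra).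
  replace (k * k ^ Q * / (k + 1) ^ Q) with (k * (k ^ Q * / (k + 1) ^ Q)) by ring.
  eapply Rle_trans; [|apply Rmult_le_compat_l; [lra|exact Hbern]].
  assert (0 <= INR Q * / (k + 1) <= INR Q * / k).
  { split; [apply Rmult_le_pos; [lra|apply Rlt_le, Rinv_0_lt_compat; lra]|].
    apply Rmult_le_compat_l; [lra|apply Rinv_le_contravar; lra]. }
  replace (k - INR Q) with (k * (1 - INR Q * / k)) by (field; lra). apply Rmult_le_compat_l; lra.
Qed.

Lemma eigen_seq_step_le (alpha : C) (Q k : nat) : INR Q + Rabs (Im alpha) <= Re alpha ->
  (1 <= k)%nat -> Re alpha <= INR k ->
  Cmod (eigen_seq alpha (S k)) * INR (S k) ^ Q <= Cmod (eigen_seq alpha k) * INR k ^ Q.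
Proof.
  intros Ha Hk HkR. assert (Hk1 : 1 <= INR k) by (apply (le_INR 1); exact Hk).
  assert (Hk0 : RtoC (INR k) <> RtoC 0) by (intros E; apply RtoC_inj in E; lra).
  rewrite eigen_seq_succ by exact Hk.
  rewrite Cmod_mult, Cmod_div, Cmod_R, Rabs_pos_eq, S_INR by (assumption || lra).
  pose proof (Cmod_sub_le (INR k) (INR Q) alpha (pos_INR Q) Ha HkR) as Hsub.
  pose proof (pow_succ_le (INR k) Q Hk1) as Hpow.
  set (E := Cmod (eigen_seq alpha k)). assert (HE : 0 <= E) by apply Cmod_ge_0.
  apply Rmult_le_reg_r with (INR k); [lra|].
  replace (E * (Cmod (INR k - alpha)%C / INR k) * (INR k + 1) ^ Q * INR k)
    with (E * (Cmod (INR k - alpha)%C * (INR k + 1) ^ Q)) by (field; lra).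
  replace (E * INR k ^ Q * INR k) with (E * (INR k * INR k ^ Q)) by ring.
  apply Rmult_le_compat_l; [exact HE|]. eapply Rle_trans; [|exact Hpow].
  apply Rmult_le_compat_r; [apply pow_le; lra|exact Hsub].
Qed.

Lemma eigen_seq_decays (alpha : C) (Q : nat) : INR Q + Rabs (Im alpha) <= Re alpha ->
  decays Q (eigen_seq alpha).
Proof.
  intros Ha. destruct (INR_unbounded (Re alpha)) as [m0 Hm0]. set (m := S m0).
  set (D := fun j => Cmod (eigen_seq alpha j) * INR j ^ Q).
  assert (Hmono : forall j, (m <= j)%nat -> D j <= D m).
  { intros j Hj. induction Hj as [|j Hj IH]; [lra|].
    assert (HjR : Re alpha <= INR j) by (apply le_INR in Hj; unfold m in Hj; rewrite S_INR in Hj; lra).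
    pose proof (eigen_seq_step_le alpha Q j Ha ltac:(unfold m in Hj; lia) HjR). unfold D in *. lra. }
  apply (bounded_of_eventually _ m (2 ^ Q * D m)). intros j Hj.
  assert (Hj1 : 1 <= INR j) by (apply (le_INR 1); unfold m in Hj; lia).
  eapply Rle_trans; [|apply Rmult_le_compat_l; [apply pow_le; lra|apply (Hmono j Hj)]].
  unfold D. rewrite <- Rmult_assoc, (Rmult_comm (2 ^ Q)), Rmult_assoc, <- Rpow_mult_distr.
  apply Rmult_le_compat_l; [apply Cmod_ge_0|]. apply pow_incr. lra.
Qed.

Definition eigen_functional (s : R) (N : nat) (mu : C) (v : nat -> C) : Prop :=
  forall b l, poly_bounded N b -> is_series (fun j => v j * b j)%C l ->
    is_series (fun j => v j * comp_coef s b j)%C (mu * l)%C.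

Lemma decays_summable (N : nat) (K : R) (v : nat -> C) : decays (N + 2) v ->
  ex_series (fun j => Cmod (v j) * (K * (INR j + 1) ^ N)).
Proof.
  intros [Kv Hv].
  assert (Hterm : forall j, Cmod (v j) * (INR j + 1) ^ N <= Kv * / (INR j + 1) ^ 2).
  { intros j. pose proof (pos_INR j). assert (Hp : 0 < (INR j + 1) ^ 2) by (apply pow_lt; lra).
    apply Rmult_le_reg_r with ((INR j + 1) ^ 2); [exact Hp|].
    replace (Kv * / (INR j + 1) ^ 2 * (INR j + 1) ^ 2) with Kv by (field; lra).
    rewrite Rmult_assoc, <- pow_add. apply Hv. }
  apply ex_series_ext with (fun j => scal K (Cmod (v j) * (INR j + 1) ^ N));
    [intros j; unfold scal; simpl; unfold mult; simpl; ring|].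
  apply (ex_series_scal (V := R_NormedModule)).
  apply (ex_series_le (V := R_CompleteNormedModule)) with (fun j => Kv * / (INR j + 1) ^ 2).
  - intros j. change (Rabs (Cmod (v j) * (INR j + 1) ^ N) <= Kv * / (INR j + 1) ^ 2).
    rewrite Rabs_pos_eq; [apply Hterm|].
    apply Rmult_le_pos; [apply Cmod_ge_0|apply pow_le; pose proof (pos_INR j); lra].
  - destruct ex_series_inv_sq as [l Hl]. exists (Kv * l). apply (is_series_scal (V := R_NormedModule)), Hl.
Qed.

Lemma ex_series_pairing (N : nat) (v b : nat -> C) : decays (N + 2) v -> poly_bounded N b ->
  exists l : C, is_series (fun j => v j * b j)%C l.
Proof.
  intros Hv [K Hb]. apply ex_series_C_le with (2 := decays_summable N K v Hv).
  intros j. rewrite Cmod_mult. apply Rmult_le_compat_l; [apply Cmod_ge_0|apply Hb].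
Qed.

Lemma eigen_functional_of_columns (s : R) (N : nat) (mu : C) (v : nat -> C) : 0 < s < 1 ->
  decays (N + 2) v ->
  (forall n, is_series (fun j => v j * RtoC (psi_coef s j n))%C (mu * v n)%C) ->
  eigen_functional s N mu v.
Proof.
  intros Hs Hv Hcol b l [K Hb] Hl.
  set (u := fun j n => (v j * (RtoC (psi_coef s j n) * b n))%C).
  assert (Hrow : forall j, sum_n (fun n => Cmod (u j n)) j <= Cmod (v j) * (K * (INR j + 1) ^ N)).
  { intros j. unfold u. rewrite (sum_n_ext _ (fun n => Cmod (v j) * Cmod (RtoC (psi_coef s j n) * b n)%C))
      by (intros n; apply Cmod_mult).
    rewrite (sum_n_mult_l (K := R_Ring)). apply Rmult_le_compat_l; [apply Cmod_ge_0|].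
    apply sum_psi_coef_Cmod_le; assumption. }
  destruct (ex_series_C_le (fun j => v j * comp_coef s b j)%C
              (fun j => Cmod (v j) * (K * (INR j + 1) ^ N))) as [l2 Hl2].
  { intros j. rewrite Cmod_mult. apply Rmult_le_compat_l; [apply Cmod_ge_0|].
    eapply Rle_trans; [apply (norm_sum_n_m (V := C_NormedModule))|apply sum_psi_coef_Cmod_le; assumption]. }
  { apply decays_summable, Hv. }
  assert (HT : is_series (fun n => mu * (v n * b n))%C l2).
  { apply (is_series_triangular u).
    - intros j n Hjn. unfold u. rewrite psi_coef_lt by exact Hjn. C_ring.
    - apply (ex_series_le (V := R_CompleteNormedModule)) with (2 := decays_summable N K v Hv). intros j.
      change (Rabs (sum_n (fun n => Cmod (u j n)) j) <= Cmod (v j) * (K * (INR j + 1) ^ N)).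
      rewrite Rabs_pos_eq; [apply Hrow|]. rewrite sum_n_Reals. apply cond_pos_sum. intros; apply Cmod_ge_0.
    - intros n. apply is_series_ext with (fun j => scal (b n) (v j * RtoC (psi_coef s j n))%C).
      + intros j. unfold u. C_ring.
      + replace (mu * (v n * b n))%C with (scal (b n) (mu * v n)%C) by C_ring.
        apply (is_series_scal (V := C_NormedModule)), Hcol.
    - apply is_series_ext with (2 := Hl2). intros j. unfold u, comp_coef.
      symmetry. exact (sum_n_mult_l (K := C_Ring) (v j) _ j). }
  replace (mu * l)%C with l2; [exact Hl2|].
  apply (is_series_unique_gen _ _ _ HT). apply (is_series_scal (V := C_NormedModule)), Hl.
Qed.

Lemma decays_lin_comb (Q : nat) (c1 c2 : C) (v1 v2 : nat -> C) :
  decays Q v1 -> decays Q v2 -> decays Q (fun j => c1 * v1 j + c2 * v2 j)%C.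
Proof.
  intros [K1 H1] [K2 H2]. exists (Cmod c1 * K1 + Cmod c2 * K2). intros j.
  assert (Hp : 0 <= (INR j + 1) ^ Q) by (apply pow_le; pose proof (pos_INR j); lra).
  apply Rle_trans with ((Cmod c1 * Cmod (v1 j) + Cmod c2 * Cmod (v2 j)) * (INR j + 1) ^ Q).
  - apply Rmult_le_compat_r; [exact Hp|]. eapply Rle_trans; [apply Cmod_triangle|]. rewrite !Cmod_mult. lra.
  - specialize (H1 j). specialize (H2 j). pose proof (Cmod_ge_0 c1). pose proof (Cmod_ge_0 c2). nra.
Qed.

Lemma eigen_functional_lin_comb (s : R) (N : nat) (mu c1 c2 : C) (v1 v2 : nat -> C) :
  decays (N + 2) v1 -> decays (N + 2) v2 ->
  eigen_functional s N mu v1 -> eigen_functional s N mu v2 ->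
  eigen_functional s N mu (fun j => c1 * v1 j + c2 * v2 j)%C.
Proof.
  intros D1 D2 E1 E2 b l Hb Hl.
  destruct (ex_series_pairing N v1 b D1 Hb) as [l1 Hl1].
  destruct (ex_series_pairing N v2 b D2 Hb) as [l2 Hl2].
  assert (Hcomb : forall (w1 w2 : nat -> C) x1 x2, is_series w1 x1 -> is_series w2 x2 ->
            is_series (fun j => c1 * w1 j + c2 * w2 j)%C (c1 * x1 + c2 * x2)%C).
  { intros w1 w2 x1 x2 Hw1 Hw2.
    exact (is_series_plus _ _ _ _ (is_series_scal (V := C_NormedModule) c1 _ _ Hw1)
                                  (is_series_scal (V := C_NormedModule) c2 _ _ Hw2)). }
  assert (El : l = (c1 * l1 + c2 * l2)%C).
  { apply (is_series_unique_gen _ _ _ Hl).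
    apply is_series_ext with (2 := Hcomb _ _ _ _ Hl1 Hl2). intros j. C_ring. }
  rewrite El. replace (mu * (c1 * l1 + c2 * l2))%C with (c1 * (mu * l1) + c2 * (mu * l2))%C by ring.
  apply is_series_ext with (2 := Hcomb _ _ _ _ (E1 b l1 Hb Hl1) (E2 b l2 Hb Hl2)). intros j. C_ring.
Qed.

Lemma annihilating_lin_comb (s : R) (N : nat) (mu : C) (v1 v2 a : nat -> C) (j1 j2 : nat) :
  decays (N + 2) v1 -> decays (N + 2) v2 ->
  eigen_functional s N mu v1 -> eigen_functional s N mu v2 -> poly_bounded N a ->
  v1 j1 <> RtoC 0 -> v1 j2 = RtoC 0 -> v2 j2 <> RtoC 0 ->
  exists v : nat -> C, decays (N + 2) v /\ eigen_functional s N mu v /\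
    is_series (fun j => v j * a j)%C (RtoC 0) /\ exists j, v j <> RtoC 0.
Proof.
  intros D1 D2 E1 E2 Ha Hj1 Hv1 Hv2.
  destruct (ex_series_pairing N _ a D1 Ha) as [l1 Hl1].
  destruct (ex_series_pairing N _ a D2 Ha) as [l2 Hl2].
  destruct (classic (l1 = RtoC 0)) as [Hl10|Hl10].
  - exists v1. repeat split; [assumption|assumption| |exists j1; exact Hj1]. rewrite <- Hl10. exact Hl1.
  - exists (fun j => l2 * v1 j + - l1 * v2 j)%C. repeat split.
    + apply decays_lin_comb; assumption.
    + apply eigen_functional_lin_comb; assumption.
    + replace (RtoC 0) with (l2 * l1 + - l1 * l2)%C by C_ring.
      apply is_series_ext with (fun j => plus (scal l2 (v1 j * a j)%C) (scal (- l1)%C (v2 j * a j)%C));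
        [intros j; C_ring|].
      apply (is_series_plus (V := C_NormedModule)); apply (is_series_scal (V := C_NormedModule)); assumption.
    + exists j2. rewrite Hv1, Cmult_0_r, Cplus_0_l. intros E.
      apply (f_equal Cmod) in E. rewrite Cmod_mult, Cmod_0 in E. apply Rmult_integral in E.
      destruct E as [E|E]; apply Cmod_eq_0 in E; [|contradiction].
      apply Hl10. replace l1 with (- (- l1))%C by C_ring. rewrite E. C_ring.
Qed.

Lemma exists_annihilating_eigen_functional (s : R) (N : nat) (a : nat -> C) :
  0 < s < 1 -> poly_bounded N a ->
  exists (v : nat -> C) (mu : C), decays (N + 2) v /\ eigen_functional s N mu v /\
    is_series (fun j => v j * a j)%C (RtoC 0) /\ exists j, v j <> RtoC 0.
Proof.
  intros Hs Ha.
  assert (Hln : ln s < 0) by (rewrite <- ln_1; apply ln_increasing; lra).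
  set (B := 2 * PI / ln s).
  assert (HB : B <> 0) by (unfold B; pose proof PI_RGT_0; apply Rmult_integral_contrapositive; split;
                             [lra|apply Rinv_neq_0_compat; lra]).
  (* s^(iB) = 1, so α = S m and α = S m + iB give the same eigenvalue s^(S m). *)
  destruct (INR_unbounded (INR (N + 2) + Rabs B)) as [m Hm].
  set (alpha1 := RtoC (INR (S m))). set (alpha2 := (INR (S m), B) : C).
  assert (Hgood : forall alpha, Rpower_C s alpha = RtoC (s ^ S m) -> Re alpha = INR (S m) ->
                    Rabs (Im alpha) <= Rabs B ->
                    decays (N + 2) (eigen_seq alpha) /\
                    eigen_functional s N (RtoC (s ^ S m)) (eigen_seq alpha)).
  { intros alpha Hpow Hre Him.
    assert (Hdec : decays (N + 2) (eigen_seq alpha)) by (apply eigen_seq_decays; rewrite Hre, S_INR; lra).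
    split; [exact Hdec|]. apply eigen_functional_of_columns; [exact Hs|exact Hdec|].
    intros n. rewrite <- Hpow. apply is_series_eigen_seq_psi_coef, Hs. }
  destruct (Hgood alpha1) as [D1 E1];
    [apply Rpower_C_INR; lra|reflexivity|simpl; rewrite Rabs_R0; apply Rabs_pos|].
  destruct (Hgood alpha2) as [D2 E2]; [apply Rpower_C_imag_period; lra|reflexivity|apply Rle_refl|].
  destruct (annihilating_lin_comb s N _ _ _ a 1 (S (S m)) D1 D2 E1 E2 Ha) as [v Hv].
  - intros E. apply (f_equal Re) in E. simpl in E. lra.
  - unfold eigen_seq. replace (1 - alpha1)%C with (RtoC (- INR m))
      by (unfold alpha1; rewrite S_INR, <- RtoC_minus; f_equal; ring).
    apply nbinom_neg_int.
  - apply nbinom_neq_0. unfold alpha2. simpl. lra.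
  - exists v, (RtoC (s ^ S m)). exact Hv.
Qed.

(** * Non-cyclicity *)

Lemma A2weight_S (beta : R) (n : nat) :
  A2weight beta (S n) = A2weight beta n * (INR (S n) / (INR (S n) + 1 + beta)).
Proof. reflexivity. Qed.

Lemma A2weight_pos (beta : R) (n : nat) : -1 < beta -> 0 < A2weight beta n.
Proof.
  intros Hb. induction n as [|n IH]; [simpl; lra|].
  pose proof (pos_INR n). rewrite A2weight_S, S_INR.
  apply Rmult_lt_0_compat; [exact IH|apply Rdiv_lt_0_compat; lra].
Qed.

Lemma A2weight_ge (beta : R) (N : nat) : -1 < beta -> 1 + beta <= INR N ->
  forall n, / (INR n + 1) ^ N <= A2weight beta n.
Proof.
  intros Hb HN n. induction n as [|n IH].
  - simpl. rewrite Rplus_0_l, pow1, Rinv_1. lra.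
  - rewrite A2weight_S, S_INR. set (k := INR n + 1) in *.
    assert (Hk : 1 <= k) by (unfold k; pose proof (pos_INR n); lra).
    assert (Hpk : 0 < k ^ N) by (apply pow_lt; lra). assert (Hpk1 : 0 < (k + 1) ^ N) by (apply pow_lt; lra).
    assert (Hbern : k ^ N * (k + 1 + beta) <= (k + 1) ^ N * k).
    { pose proof (Rle_pow_lin (/ k) N ltac:(apply Rlt_le, Rinv_0_lt_compat; lra)) as H.
      replace (1 + / k) with ((k + 1) * / k) in H by (field; lra).
      rewrite Rpow_mult_distr, pow_inv in H.
      apply Rmult_le_reg_r with (/ (k ^ N * k)); [apply Rinv_0_lt_compat, Rmult_lt_0_compat; lra|].
      replace (k ^ N * (k + 1 + beta) * / (k ^ N * k)) with (1 + (1 + beta) * / k) by (field; lra).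
      replace ((k + 1) ^ N * k * / (k ^ N * k)) with ((k + 1) ^ N * / k ^ N) by (field; lra).
      eapply Rle_trans; [|exact H]. apply Rplus_le_compat_l, Rmult_le_compat_r; [|exact HN].
      apply Rlt_le, Rinv_0_lt_compat; lra. }
    apply Rle_trans with (/ k ^ N * (k / (k + 1 + beta))).
    + apply Rmult_le_reg_r with ((k + 1) ^ N * (k + 1 + beta)); [apply Rmult_lt_0_compat; lra|].
      replace (/ (k + 1) ^ N * ((k + 1) ^ N * (k + 1 + beta))) with (k + 1 + beta) by (field; lra).
      replace (/ k ^ N * (k / (k + 1 + beta)) * ((k + 1) ^ N * (k + 1 + beta))) with ((k + 1) ^ N * k / k ^ N)
        by (field; lra).
      apply Rmult_le_reg_r with (k ^ N); [exact Hpk|].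
      replace ((k + 1) ^ N * k / k ^ N * k ^ N) with ((k + 1) ^ N * k) by (field; lra).
      lra.
    + apply Rmult_le_compat_r; [apply Rdiv_le_0_compat; lra|exact IH].
Qed.

Lemma inA2_poly_bounded (beta : R) (N : nat) (a : nat -> C) :
  (forall n, / (INR n + 1) ^ N <= A2weight beta n) ->
  ex_series (fun n => A2weight beta n * Cmod (a n) ^ 2) -> poly_bounded N a.
Proof.
  intros Hw Hs. destruct (ex_series_terms_bounded _ Hs) as [M HM].
  exists (M + 1). intros n. specialize (HM n).
  set (P := (INR n + 1) ^ N) in *. set (y := Cmod (a n)).
  assert (HP : 1 <= P) by (apply pow_R1_Rle; pose proof (pos_INR n); lra).
  assert (Hy : 0 <= y) by apply Cmod_ge_0.
  assert (HwP : / P <= A2weight beta n) by apply Hw.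
  rewrite Rabs_pos_eq in HM by (apply Rmult_le_pos; [apply Rlt_le, Rlt_le_trans with (/ P);
                                   [apply Rinv_0_lt_compat; lra|exact HwP]|apply pow_le, Hy]).
  assert (Hy2 : y ^ 2 <= M * P).
  { apply Rmult_le_reg_l with (/ P); [apply Rinv_0_lt_compat; lra|].
    replace (/ P * (M * P)) with M by (field; lra).
    eapply Rle_trans; [|exact HM]. apply Rmult_le_compat_r; [apply pow_le, Hy|exact HwP]. }
  assert (HM0 : 0 <= M) by (pose proof (pow_le y 2 Hy); nra).
  destruct (Rle_or_lt y ((M + 1) * P)) as [Hle|Hlt]; [exact Hle|nra].
Qed.

Lemma Cmod_pairing_le (w : nat -> R) (v d : nat -> C) (L V e : R) (x : C) :
  (forall j, 0 < w j) -> 0 < e ->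
  is_series (fun j => w j * Cmod (d j) ^ 2) L -> is_series (fun j => Cmod (v j) ^ 2 / w j) V ->
  is_series (fun j => v j * d j)%C x -> Cmod x <= (e * L + V / e) / 2.
Proof.
  intros Hw He HL HV Hx.
  apply (norm_series_le _ (fun j => (e * (w j * Cmod (d j) ^ 2) + Cmod (v j) ^ 2 / w j / e) / 2) _ _ Hx).
  - apply is_series_ext
      with (fun j => scal (/ 2) (plus (scal e (w j * Cmod (d j) ^ 2)) (scal (/ e) (Cmod (v j) ^ 2 / w j)))).
    + intros j. pose proof (Hw j). unfold scal, plus; simpl; unfold mult; simpl. field. split; lra.
    + replace ((e * L + V / e) / 2) with (scal (/ 2) (plus (scal e L) (scal (/ e) V)))
        by (unfold scal, plus; simpl; unfold mult; simpl; field; lra).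
      apply (is_series_scal (V := R_NormedModule)), (is_series_plus (V := R_NormedModule));
        apply (is_series_scal (V := R_NormedModule)); assumption.
  - intros j. change (Cmod (v j * d j)%C <= (e * (w j * Cmod (d j) ^ 2) + Cmod (v j) ^ 2 / w j / e) / 2).
    rewrite Cmod_mult. specialize (Hw j).
    set (p := Cmod (v j)). set (q := Cmod (d j)).
    assert (Hsq : 0 <= (e * w j * q - p) ^ 2 / (2 * e * w j))
      by (apply Rdiv_le_0_compat; [apply pow2_ge_0|nra]).
    replace ((e * (w j * q ^ 2) + p ^ 2 / w j / e) / 2) with (p * q + (e * w j * q - p) ^ 2 / (2 * e * w j))
      by (field; lra).
    lra.
Qed.

Definition cyclic_vector (beta : R) (T : (C -> C) -> C -> C) (f : C -> C) : Prop :=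
  forall g, inA2 beta g -> forall eps, 0 < eps ->
    exists (M : nat) (c : nat -> C),
      A2dist_lt beta g (fun z => sum_n (fun k => c k * Nat.iter k T f z)%C M) eps.

Lemma orbit_coeffs (s : R) (N : nat) (f : C -> C) (a : nat -> C) :
  0 < s < 1 -> psi_self_map (RtoC s) -> has_coeffs f a -> poly_bounded N a ->
  forall k, has_coeffs (Nat.iter k (comp_op (psi (RtoC s))) f) (Nat.iter k (comp_coef s) a) /\
            poly_bounded N (Nat.iter k (comp_coef s) a).
Proof.
  intros Hs Hpsi Hf Ha k. induction k as [|k [IHf IHa]]; [split; assumption|]. simpl. split.
  - apply has_coeffs_comp_op with N; assumption.
  - apply poly_bounded_comp_coef; assumption.
Qed.

Lemma orbit_span_annihilated (s : R) (N : nat) (mu : C) (a v c : nat -> C) (M : nat) :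
  (forall k, poly_bounded N (Nat.iter k (comp_coef s) a)) -> eigen_functional s N mu v ->
  is_series (fun j => v j * a j)%C (RtoC 0) ->
  is_series (fun j => v j * sum_n (fun k => c k * Nat.iter k (comp_coef s) a j) M)%C (RtoC 0).
Proof.
  intros Hpb Hv Ha.
  assert (Hk : forall k, is_series (fun j => v j * Nat.iter k (comp_coef s) a j)%C (RtoC 0)).
  { induction k as [|k IH]; [exact Ha|].
    replace (RtoC 0) with (mu * RtoC 0)%C by apply Cmult_0_r. apply Hv; [apply Hpb|exact IH]. }
  replace (RtoC 0) with (sum_n (fun k => c k * RtoC 0)%C M)
    by exact (sum_n_zero _ M (fun k _ => Cmult_0_r (c k))).
  apply is_series_ext with (fun j => sum_n (fun k => c k * (v j * Nat.iter k (comp_coef s) a j))%C M).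
  - intros j. rewrite <- (sum_n_mult_l (K := C_Ring)). apply sum_n_ext. intros k. C_ring.
  - apply (is_series_sum_n (fun j k => c k * (v j * Nat.iter k (comp_coef s) a j))%C).
    intros k. apply (is_series_scal (V := C_NormedModule)), Hk.
Qed.

Lemma ex_series_dual_weight (beta : R) (N : nat) (v : nat -> C) :
  (forall n, / (INR n + 1) ^ N <= A2weight beta n) -> (forall n, 0 < A2weight beta n) ->
  decays (N + 2) v -> ex_series (fun j => Cmod (v j) ^ 2 / A2weight beta j).
Proof.
  intros Hge Hpos Hv. destruct Hv as [K HK].
  apply (ex_series_le (V := R_CompleteNormedModule)) with (2 := decays_summable N K v (ex_intro _ K HK)).
  intros j. change (Rabs (Cmod (v j) ^ 2 / A2weight beta j) <= Cmod (v j) * (K * (INR j + 1) ^ N)).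
  pose proof (Hpos j) as Hw. pose proof (Cmod_ge_0 (v j)) as Hv0. pose proof (pos_INR j).
  assert (Hp : 1 <= (INR j + 1) ^ N) by (apply pow_R1_Rle; lra).
  assert (Hv1 : Cmod (v j) <= K).
  { eapply Rle_trans; [|apply (HK j)]. rewrite <- (Rmult_1_r (Cmod (v j))) at 1.
    apply Rmult_le_compat_l; [exact Hv0|apply pow_R1_Rle; lra]. }
  assert (Hinv : / A2weight beta j <= (INR j + 1) ^ N).
  { rewrite <- (Rinv_inv ((INR j + 1) ^ N)).
    apply Rinv_le_contravar; [apply Rinv_0_lt_compat; lra|apply Hge]. }
  rewrite Rabs_pos_eq by (apply Rdiv_le_0_compat; [apply pow2_ge_0|exact Hw]).
  unfold Rdiv. simpl. rewrite Rmult_1_r, Rmult_assoc. apply Rmult_le_compat_l; [exact Hv0|].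
  apply Rmult_le_compat; [exact Hv0|apply Rlt_le, Rinv_0_lt_compat, Hw|exact Hv1|exact Hinv].
Qed.

Lemma exists_am_gm_bound_lt (nu V : R) : 0 < nu -> 0 <= V ->
  exists e eps, 0 < e /\ 0 < eps /\ forall L, L < eps ^ 2 -> (e * L + V / e) / 2 < nu.
Proof.
  intros Hnu HV. set (e := (2 * V + 1) / nu). assert (He : 0 < e) by (apply Rdiv_lt_0_compat; lra).
  exists e, (Rmin 1 (nu / e)).
  split; [exact He|]. split; [apply Rmin_pos; [lra|apply Rdiv_lt_0_compat; lra]|].
  intros L HL. set (eps := Rmin 1 (nu / e)) in HL.
  assert (Heps1 : eps <= 1) by apply Rmin_l. assert (Heps2 : eps <= nu / e) by apply Rmin_r.
  assert (Heps0 : 0 < eps) by (apply Rmin_pos; [lra|apply Rdiv_lt_0_compat; lra]).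
  assert (HeL : e * L < nu).
  { apply Rlt_le_trans with (e * eps); [apply Rmult_lt_compat_l; [exact He|simpl in HL; nra]|].
    apply Rmult_le_reg_r with (/ e); [apply Rinv_0_lt_compat, He|].
    replace (e * eps * / e) with eps by (field; lra). exact Heps2. }
  assert (HVe : V / e < nu).
  { unfold e. replace (V / ((2 * V + 1) / nu)) with (nu * (V / (2 * V + 1))) by (field; lra).
    rewrite <- (Rmult_1_r nu) at 2. apply Rmult_lt_compat_l; [exact Hnu|].
    apply Rmult_lt_reg_r with (2 * V + 1); [lra|].
    replace (V / (2 * V + 1) * (2 * V + 1)) with V by (field; lra). lra. }
  lra.
Qed.

Lemma inA2_monomial (beta : R) (j0 : nat) : inA2 beta (fun z => pow_n z j0).
Proof.
  exists (fun j => if Nat.eqb j j0 then RtoC 1 else RtoC 0). split; [apply has_coeffs_monomial|].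
  exists (sum_n (fun n => A2weight beta n * Cmod (if Nat.eqb n j0 then RtoC 1 else RtoC 0) ^ 2) j0).
  apply (is_series_finite (V := R_NormedModule)). intros j Hj.
  destruct (Nat.eqb_spec j j0); [lia|]. rewrite Cmod_0. change (A2weight beta j * (0 * (0 * 1)) = 0). ring.
Qed.

Lemma not_cyclic_vector_of_annihilator (beta s : R) (N : nat) (f : C -> C) (a v : nat -> C)
  (mu : C) (j0 : nat) :
  0 < s < 1 -> psi_self_map (RtoC s) ->
  (forall n, / (INR n + 1) ^ N <= A2weight beta n) -> (forall n, 0 < A2weight beta n) ->
  has_coeffs f a -> poly_bounded N a ->
  decays (N + 2) v -> eigen_functional s N mu v ->
  is_series (fun j => v j * a j)%C (RtoC 0) -> v j0 <> RtoC 0 ->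
  ~ cyclic_vector beta (comp_op (psi (RtoC s))) f.
Proof.
  intros Hs Hpsi Hge Hpos Hf Ha Hdec Heig Hann Hj0 Hcyc.
  set (V := Series (fun j => Cmod (v j) ^ 2 / A2weight beta j)).
  pose proof (Series_correct _ (ex_series_dual_weight beta N v Hge Hpos Hdec)) as HV. fold V in HV.
  assert (HV0 : 0 <= V) by (apply (series_nonneg _ _ HV); intros j;
                            apply Rdiv_le_0_compat; [apply pow2_ge_0|apply Hpos]).
  destruct (exists_am_gm_bound_lt (Cmod (v j0)) V (proj1 (Cmod_gt_0 _) Hj0) HV0)
    as [e [eps [He [Heps Hsmall]]]].
  destruct (Hcyc _ (inA2_monomial beta j0) eps Heps) as [M [c [a' [b' [L [Ha' [Hb' [HL HLe]]]]]]]].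
  pose proof (orbit_coeffs s N f a Hs Hpsi Hf Ha) as Horb.
  pose proof (has_coeffs_unique _ _ _ Ha' (has_coeffs_monomial j0)) as Ha'_eq.
  pose proof (has_coeffs_unique _ _ _ Hb' (has_coeffs_lin_comb _ _ c M (fun k => proj1 (Horb k)))) as Hb'_eq.
  assert (Hpair : is_series (fun j => v j * (a' j - b' j))%C (v j0)).
  { pose proof (orbit_span_annihilated s N mu a v c M (fun k => proj2 (Horb k)) Heig Hann) as Hspan.
    pose proof (is_series_indicator v j0) as Hunit.
    replace (v j0) with (minus (v j0) (RtoC 0)) by C_ring.
    apply is_series_ext with (2 := is_series_minus _ _ _ _ Hunit Hspan).
    intros j. rewrite Ha'_eq, Hb'_eq. C_ring. }
  pose proof (Cmod_pairing_le (A2weight beta) v (fun j => a' j - b' j)%C L V e (v j0) Hpos He HL HV Hpair).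
  pose proof (Hsmall L HLe). lra.
Qed.

Theorem lemma4p2 (beta : R) (s : C) :
  -1 < beta -> 0 < Cmod s -> Cmod s < 1 -> psi_self_map s ->
  ~ cyclic_A2 beta (comp_op (psi s)).
Proof.
  intros Hb Hs0 Hs1 Hpsi [f [[a [Ha Hwa]] Hcyc]].
  destruct (psi_self_map_unit_interval s Hs0 Hs1 Hpsi) as [Hreal Hs].
  change (cyclic_vector beta (comp_op (psi s)) f) in Hcyc.
  rewrite Hreal in Hpsi, Hcyc.
  destruct (INR_unbounded (1 + beta)) as [N HN].
  pose proof (A2weight_ge beta N Hb ltac:(lra)) as Hge.
  pose proof (fun n => A2weight_pos beta n Hb) as Hpos.
  pose proof (inA2_poly_bounded beta N a Hge Hwa) as Hpoly.
  destruct (exists_annihilating_eigen_functional (Re s) N a Hs Hpoly)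
    as [v [mu [Hdec [Heig [Hann [j0 Hj0]]]]]].
  exact (not_cyclic_vector_of_annihilator beta (Re s) N f a v mu j0
           Hs Hpsi Hge Hpos Ha Hpoly Hdec Heig Hann Hj0 Hcyc).
Qed.
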